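(* Let $M(E,I)$ be a free partially commutative monoid, with $E$ totally ordered by $<$, and let $E_v\subseteq E$, $v\in V$, be the maximal subsets of mutually commuting generators. For each $v\in V$ let $T_v\subset M(E_v)$ be the set of products $a_1a_2\cdots a_n$ with $a_1<a_2<\dots<a_n$, $a_j\in E_v$, $n$ finite with $n\leqslant|E_v|$ (the product for $n=0$ being $1$), and let $\mathfrak FT_v$ be the full subcategory of $\mathfrak FM(E,I)$ with object set $T_v$. Then the inclusion $\bigcup_{v\in V}\mathfrak FT_v\subset\mathfrak FM(E,I)$ is strong coinitial.
   Context: $M(E,I)$: monoid generated by $E$ with relations $ab=ba$ for $(a,b)\in I$, $I\subseteq E\times E$ irreflexive symmetric; a subset of $E$ consists of mutually commuting generators if each pair of distinct elements lies in $I$; $M(E_v)$ is the submonoid generated by $E_v$. $\mathfrak FM$: objects the elements of $M$, morphisms $\alpha\to\beta$ the pairs $(f,g)$ with $g\alpha f=\beta$, composition $(f_2,g_2)\circ(f_1,g_1)=(f_1f_2,g_2g_1)$. A functor $S:\mathcal C\to\mathcal D$ of small categories is strong coinitial if every comma category $S/d$ (objects $(c,\alpha:S(c)\to d)$, morphisms $f$ with $\alpha_2\circ S(f)=\alpha_1$) is connected and has $\varinjlim{}_q^{S/d}\Delta\mathbb Z=0$ for $q>0$ (left derived functors of the colimit of the constant functor $\Delta\mathbb Z$). *)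

From Stdlib Require Import List Relations Sorted ZArith.
From Stdlib Require Import ClassicalEpsilon FunctionalExtensionality
  PropExtensionality ProofIrrelevance.
Import ListNotations.

Set Implicit Arguments.

Record cat := Cat {
  ob : Type;
  hom : ob -> ob -> Type;
  cid : forall a, hom a a;
  ccomp : forall x y z, hom y z -> hom x y -> hom x z;
  ccomp_id_l : forall a b (f : hom a b), ccomp (cid b) f = f;
  ccomp_id_r : forall a b (f : hom a b), ccomp f (cid a) = f;
  ccomp_assoc : forall a b c d (h : hom c d) (g : hom b c) (f : hom a b),
      ccomp h (ccomp g f) = ccomp (ccomp h g) f }.

Arguments cid {_} a.
Arguments ccomp {_ x y z} _ _.

Record functor (C D : cat) := Functor {
  fob : ob C -> ob D;
  fhom : forall a b, hom C a b -> hom D (fob a) (fob b);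
  fhom_id : forall a, fhom a a (cid a) = cid (fob a);
  fhom_comp : forall a b c (g : hom C b c) (f : hom C a b),
      fhom a c (ccomp g f) = ccomp (fhom b c g) (fhom a b f) }.

Arguments fob {C D} _ _.
Arguments fhom {C D} _ {a b} _.

Section Comma.
Variables (C D : cat) (S : functor C D) (d : ob D).

Definition comma_ob := {c : ob C & hom D (fob S c) d}.
Definition comma_hom (x y : comma_ob) :=
  {f : hom C (projT1 x) (projT1 y) | ccomp (projT2 y) (fhom S f) = projT2 x}.

Definition comma_id (x : comma_ob) : comma_hom x x.
Proof.
  refine (exist _ (cid (projT1 x)) _).
  rewrite fhom_id, (@ccomp_id_r D). reflexivity.
Defined.

Definition comma_comp (x y z : comma_ob) (g : comma_hom y z) (f : comma_hom x y)
  : comma_hom x z.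
Proof.
  refine (exist _ (ccomp (proj1_sig g) (proj1_sig f)) _).
  destruct g as [g pg]; destruct f as [f pf]; simpl.
  rewrite fhom_comp, (@ccomp_assoc D), pg, pf. reflexivity.
Defined.

Lemma comma_id_l x y (f : comma_hom x y) : comma_comp (comma_id y) f = f.
Proof. destruct f as [f pf]. apply subset_eq_compat. simpl. apply (@ccomp_id_l C). Qed.
Lemma comma_id_r x y (f : comma_hom x y) : comma_comp f (comma_id x) = f.
Proof. destruct f as [f pf]. apply subset_eq_compat. simpl. apply (@ccomp_id_r C). Qed.
Lemma comma_assoc x y z w (h : comma_hom z w) (g : comma_hom y z) (f : comma_hom x y) :
  comma_comp h (comma_comp g f) = comma_comp (comma_comp h g) f.
Proof. apply subset_eq_compat. simpl. apply (@ccomp_assoc C). Qed.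

Definition comma : cat :=
  @Cat comma_ob comma_hom comma_id comma_comp comma_id_l comma_id_r comma_assoc.
End Comma.

Section FullSub.
Variables (C : cat) (P : ob C -> Prop).
Definition fs_ob := {x : ob C | P x}.
Definition fs_hom (x y : fs_ob) := hom C (proj1_sig x) (proj1_sig y).
Definition full_sub : cat :=
  @Cat fs_ob fs_hom (fun x => cid (proj1_sig x))
       (fun x y z g f => ccomp g f)
       (fun x y f => @ccomp_id_l C _ _ f) (fun x y f => @ccomp_id_r C _ _ f)
       (fun x y z w h g f => @ccomp_assoc C _ _ _ _ h g f).
Definition incl : functor full_sub C :=
  @Functor full_sub C (fun x => proj1_sig x) (fun x y f => f)
           (fun x => eq_refl) (fun x y z g f => eq_refl).
End FullSub.

Definition connected (C : cat) : Prop :=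
  inhabited (ob C) /\
  forall x y, clos_refl_sym_trans (ob C) (fun a b => inhabited (hom C a b)) x y.

Section Nerve.
Variable C : cat.

Fixpoint seg (n : nat) (a : ob C) : Type :=
  match n with
  | 0 => unit
  | S m => {b : ob C & (hom C a b * seg m b)%type}
  end.

Definition simplex (n : nat) := {a : ob C & seg n a}.

(* remove vertex k+1 of a path (composing the adjacent arrows, or
   dropping the last arrow) *)
Fixpoint del (n : nat) : forall (a : ob C), seg (S n) a -> nat -> seg n a :=
  match n return forall (a : ob C), seg (S n) a -> nat -> seg n a with
  | 0 => fun a s k => tt
  | S m => fun a s k =>
      let (b, p) := s in
      match k with
      | 0 => let (c, q) := snd p in existT _ c (ccomp (fst q) (fst p), snd q)
      | S k' => existT _ b (fst p, @del m b (snd p) k')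
      end
  end.

Definition face (n : nat) (i : nat) (s : simplex (S n)) : simplex n :=
  match i with
  | 0 => let (a, t) := s in let (b, p) := t in existT _ b (snd p)
  | S j => let (a, t) := s in existT _ a (@del n a t j)
  end.

Definition chain (n : nat) := list (Z * simplex n).

Definition coef (n : nat) (c : chain n) (t : simplex n) : Z :=
  fold_right (fun p acc =>
      ((if excluded_middle_informative (snd p = t) then fst p else 0) + acc)%Z)
    0%Z c.

Definition sgn (i : nat) : Z := if Nat.even i then 1%Z else (-1)%Z.

Definition bd (n : nat) (c : chain (S n)) : chain n :=
  flat_map (fun p => map (fun i => (sgn i * fst p, @face n i (snd p)))%Z
                         (seq 0 (S (S n)))) c.

(* colim_q^C Delta Z = H_q(C_*(C, Delta Z)) vanishes for all q > 0:
   every (q = n+1)-cycle is a boundary (chains compared coefficientwise). *)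
Definition colim_pos_vanish : Prop :=
  forall (n : nat) (c : chain (S n)),
    (forall t, coef (bd c) t = 0%Z) ->
    exists b : chain (S (S n)), forall t, coef (bd b) t = coef c t.
End Nerve.

Definition strong_coinitial (C D : cat) (S : functor C D) : Prop :=
  forall d : ob D, connected (comma S d) /\ colim_pos_vanish (comma S d).

Lemma rst_map (A : Type) (R : relation A) (f : A -> A) :
  (forall u v, R u v -> R (f u) (f v)) ->
  forall u v, clos_refl_sym_trans A R u v -> clos_refl_sym_trans A R (f u) (f v).
Proof.
  intros H u v h; induction h.
  - apply rst_step; auto.
  - apply rst_refl.
  - apply rst_sym; auto.
  - eapply rst_trans; eauto.
Qed.

Section Trace.
Variables (E : Type) (I : E -> E -> Prop).

Definition trace_step (u v : list E) : Prop :=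
  exists x y a b, I a b /\ u = x ++ a :: b :: y /\ v = x ++ b :: a :: y.

Definition teq := clos_refl_sym_trans (list E) trace_step.
Definition tcls (w : list E) : list E -> Prop := fun u => teq w u.

Definition trace_monoid := {P : list E -> Prop | exists w, P = tcls w}.

Definition cls (w : list E) : trace_monoid := exist _ (tcls w) (ex_intro _ w eq_refl).
Definition rep (m : trace_monoid) : list E :=
  proj1_sig (constructive_indefinite_description _ (proj2_sig m)).

Lemma cls_rep m : cls (rep m) = m.
Proof.
  destruct m as [P HP]. unfold cls, rep. apply subset_eq_compat. simpl.
  destruct (constructive_indefinite_description _ HP) as [w Hw]. simpl.
  symmetry; exact Hw.
Qed.

Lemma tcls_eq u w : teq u w -> tcls u = tcls w.
Proof.
  intro h. apply functional_extensionality; intro x.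
  apply propositional_extensionality. unfold tcls; split; intro k.
  - eapply rst_trans; [apply rst_sym; exact h | exact k].
  - eapply rst_trans; [exact h | exact k].
Qed.

Lemma cls_eq u w : teq u w -> cls u = cls w.
Proof. intro h; apply subset_eq_compat; apply tcls_eq; exact h. Qed.

Lemma rep_cls w : teq w (rep (cls w)).
Proof.
  unfold rep. destruct (constructive_indefinite_description _ (proj2_sig (cls w)))
    as [u Hu]. simpl in *.
  assert (H : tcls w w) by apply rst_refl.
  rewrite Hu in H. apply rst_sym; exact H.
Qed.

Lemma teq_app_r u v w : teq u v -> teq (u ++ w) (v ++ w).
Proof.
  apply (@rst_map _ _ (fun z => z ++ w)).
  intros a b [x [y [p [q [H [-> ->]]]]]].
  exists x, (y ++ w), p, q. rewrite <- !app_assoc. simpl. auto.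
Qed.

Lemma teq_app_l u v w : teq u v -> teq (w ++ u) (w ++ v).
Proof.
  apply (@rst_map _ _ (fun z => w ++ z)).
  intros a b [x [y [p [q [H [-> ->]]]]]].
  exists (w ++ x), y, p, q. rewrite <- !app_assoc. auto.
Qed.

Definition mmul (m n : trace_monoid) : trace_monoid := cls (rep m ++ rep n).
Definition mone : trace_monoid := cls nil.

Lemma mmul_cls u w : mmul (cls u) (cls w) = cls (u ++ w).
Proof.
  apply cls_eq. eapply rst_trans.
  - apply teq_app_r. apply rst_sym. apply rep_cls.
  - apply teq_app_l. apply rst_sym. apply rep_cls.
Qed.

Lemma tm_ind (P : trace_monoid -> Prop) : (forall w, P (cls w)) -> forall m, P m.
Proof. intros H m. rewrite <- (cls_rep m). apply H. Qed.

Lemma mmul_assoc a b c : mmul a (mmul b c) = mmul (mmul a b) c.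
Proof.
  revert a b c. refine (tm_ind _ _); intro a.
  refine (tm_ind _ _); intro b. refine (tm_ind _ _); intro c.
  rewrite !mmul_cls, app_assoc. reflexivity.
Qed.
Lemma mmul_1l a : mmul mone a = a.
Proof. revert a; refine (tm_ind _ _); intro a. unfold mone. rewrite mmul_cls. reflexivity. Qed.
Lemma mmul_1r a : mmul a mone = a.
Proof. revert a; refine (tm_ind _ _); intro a. unfold mone. rewrite mmul_cls, app_nil_r. reflexivity. Qed.

Definition FM_hom (a b : trace_monoid) :=
  {p : trace_monoid * trace_monoid | mmul (mmul (snd p) a) (fst p) = b}.

Definition FM_id (a : trace_monoid) : FM_hom a a.
Proof.
  refine (exist _ (mone, mone) _). simpl. rewrite mmul_1l, mmul_1r. reflexivity.
Defined.

Definition FM_comp (a b c : trace_monoid) (g : FM_hom b c) (f : FM_hom a b) : FM_hom a c.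
Proof.
  refine (exist _ (mmul (fst (proj1_sig f)) (fst (proj1_sig g)),
                   mmul (snd (proj1_sig g)) (snd (proj1_sig f))) _).
  destruct g as [[f2 g2] Hg]; destruct f as [[f1 g1] Hf]; simpl in *.
  rewrite <- Hg, <- Hf. rewrite !mmul_assoc. reflexivity.
Defined.

Lemma FM_id_l a b (f : FM_hom a b) : FM_comp (FM_id b) f = f.
Proof.
  destruct f as [[f1 g1] Hf]. apply subset_eq_compat. simpl.
  rewrite mmul_1l, mmul_1r. reflexivity.
Qed.
Lemma FM_id_r a b (f : FM_hom a b) : FM_comp f (FM_id a) = f.
Proof.
  destruct f as [[f1 g1] Hf]. apply subset_eq_compat. simpl.
  rewrite mmul_1l, mmul_1r. reflexivity.
Qed.
Lemma FM_assoc a b c d (h : FM_hom c d) (g : FM_hom b c) (f : FM_hom a b) :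
  FM_comp h (FM_comp g f) = FM_comp (FM_comp h g) f.
Proof.
  apply subset_eq_compat. simpl. rewrite !mmul_assoc. reflexivity.
Qed.

Definition FM : cat := @Cat trace_monoid FM_hom FM_id FM_comp FM_id_l FM_id_r FM_assoc.

Definition commuting_set (A : E -> Prop) : Prop :=
  forall a b, A a -> A b -> a <> b -> I a b.
Definition maximal_commuting_set (A : E -> Prop) : Prop :=
  commuting_set A /\
  forall B, commuting_set B -> (forall x, A x -> B x) -> forall x, B x -> A x.

Variable lt : E -> E -> Prop.

Definition T_set (Ev : E -> Prop) (m : trace_monoid) : Prop :=
  exists l : list E, (forall x, In x l -> Ev x) /\ Sorted lt l /\ m = cls l.

Definition union_T (m : trace_monoid) : Prop :=
  exists Ev, maximal_commuting_set Ev /\ T_set Ev m.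
End Trace.

(* Fix [d]. An object of the comma category over [d] is a factorisation
   [d = g c f] with [c] a product of distinct pairwise commuting letters; as
   [M(E,I)] is cancellative, the comma category is a preorder. Induct on [d].
   Over [1] there is a single object. Over [d a], the last letter [a] of
   [g c f] is the last letter of [f], or else of [c], or else of [g]. Deleting
   it gives a monotone map [strip] to the comma category over [d], appending it
   to [f] gives [extend] back, and moving it from [g] into [c] gives [push],
   with [id <= push >= extend o strip]. Hence the comma category over [d a] is
   a homotopy retract of the one over [d], and connectedness and the vanishing
   of [colim_q] for [q > 0] are inherited; for the latter, the prism operator
   turns natural transformations into chain homotopies. *)

From mathcomp Require classical_sets.
From Stdlib Require Import List Relations Sorted ZArith Lia.
From Stdlib Require Import ClassicalEpsilon ProofIrrelevance Classical.
(* Imported after [List], so that [incl] is the inclusion functor of [Defs]. *)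
From Pilot Require Import Defs.
Import ListNotations.
Open Scope Z_scope.

Fixpoint remove_nth {A : Type} (i : nat) (l : list A) : list A :=
  match l, i with
  | [], _ => []
  | _ :: l', O => l'
  | x :: l', S j => x :: remove_nth j l'
  end.

Lemma remove_nth_S_cons {A} i (x : A) l : remove_nth (S i) (x :: l) = x :: remove_nth i l.
Proof. reflexivity. Qed.

Lemma remove_nth_map {A B} (f : A -> B) i l :
  remove_nth i (map f l) = map f (remove_nth i l).
Proof. revert i; induction l; intros [|i]; simpl; auto. now rewrite IHl. Qed.

Lemma remove_nth_length {A} i (l : list A) :
  (i < length l)%nat -> length (remove_nth i l) = pred (length l).
Proof.
  revert i; induction l; intros [|i]; simpl; intros; try lia.
  rewrite IHl; lia.
Qed.

Lemma remove_nth_repeat {A} (a : A) k i :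
  (i < k)%nat -> remove_nth i (repeat a k) = repeat a (pred k).
Proof.
  revert i; induction k; intros [|i] H; simpl; try lia; auto.
  rewrite IHk by lia. destruct k; simpl; auto; lia.
Qed.

Fixpoint zsum (n : nat) (f : nat -> Z) : Z :=
  match n with O => 0 | S k => zsum k f + f k end.

Lemma zsum_ext n f g : (forall i, (i < n)%nat -> f i = g i) -> zsum n f = zsum n g.
Proof. induction n; simpl; intros; auto. rewrite IHn, H; auto. Qed.

Lemma zsum_add n f g : zsum n (fun i => f i + g i) = zsum n f + zsum n g.
Proof. induction n; simpl; auto. rewrite IHn; lia. Qed.

Lemma zsum_mul_l n c f : zsum n (fun i => c * f i) = c * zsum n f.
Proof. induction n; simpl; [lia|]. rewrite IHn; ring. Qed.

Lemma zsum_opp n f : zsum n (fun i => - f i) = - zsum n f.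
Proof. induction n; simpl; auto. rewrite IHn; lia. Qed.

Lemma zsum_split a b f : zsum (a + b) f = zsum a f + zsum b (fun k => f (a + k)%nat).
Proof.
  induction b; simpl; [rewrite Nat.add_0_r; lia|].
  rewrite Nat.add_succ_r; simpl; rewrite IHb; lia.
Qed.

Lemma zsum_shift n f : zsum (S n) f = f O + zsum n (fun k => f (S k)).
Proof. rewrite <- Nat.add_1_l, zsum_split. simpl. ring. Qed.

Lemma zsum_swap n m f :
  zsum n (fun i => zsum m (fun j => f i j)) = zsum m (fun j => zsum n (fun i => f i j)).
Proof.
  induction n; simpl.
  - induction m; simpl; auto. rewrite <- IHm; auto.
  - rewrite IHn, <- zsum_add; auto.
Qed.

Lemma zsum_telescope n g : zsum n (fun i => g i - g (S i)) = g O - g n.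
Proof. induction n; simpl; [lia|]. rewrite IHn; lia. Qed.

Lemma sgn_S i : sgn (S i) = - sgn i.
Proof. unfold sgn. rewrite Nat.even_succ, <- Nat.negb_even. now destruct (Nat.even i). Qed.

Lemma sgn_sq i : sgn i * sgn i = 1.
Proof. unfold sgn. now destruct (Nat.even i). Qed.

Lemma zsum_sgn k : zsum k sgn = if Nat.even k then 0 else 1.
Proof.
  induction k; auto. cbn [zsum]. rewrite IHk. unfold sgn.
  rewrite Nat.even_succ, <- Nat.negb_even. now destruct (Nat.even k).
Qed.

(** * Formal chains of vertex lists and the prism operator *)

(* A simplex of a thin category is determined by its list of vertices, so
   chains are handled as formal Z-combinations of vertex lists, compared
   coefficientwise; [lpair phi L] pairs such a chain with [phi]. *)
Section VertexChains.
Context {V : Type}.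

Definition lchain := list (Z * list V).

Definition delta (x w : list V) : Z := if excluded_middle_informative (x = w) then 1 else 0.

Definition lpair (phi : list V -> Z) (L : lchain) : Z :=
  fold_right (fun p acc => fst p * phi (snd p) + acc) 0 L.

Definition lcoef (L : lchain) (w : list V) : Z := lpair (fun u => delta u w) L.

Definition lceq (L1 L2 : lchain) : Prop := forall w, lcoef L1 w = lcoef L2 w.

Definition lscale (k : Z) (L : lchain) : lchain := map (fun q => (k * fst q, snd q)) L.

Definition lbd (v : list V) : lchain :=
  map (fun i => (sgn i, remove_nth i v)) (seq 0 (length v)).

Lemma lcoef_nil w : lcoef [] w = 0.
Proof. reflexivity. Qed.

Lemma lpair_app phi L1 L2 : lpair phi (L1 ++ L2) = lpair phi L1 + lpair phi L2.
Proof. induction L1; simpl; auto. rewrite IHL1; lia. Qed.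

Lemma lpair_scale phi k L : lpair phi (lscale k L) = k * lpair phi L.
Proof. induction L; simpl; [lia|]. rewrite IHL; ring. Qed.

Lemma lcoef_app L1 L2 w : lcoef (L1 ++ L2) w = lcoef L1 w + lcoef L2 w.
Proof. apply lpair_app. Qed.

Lemma lcoef_scale k L w : lcoef (lscale k L) w = k * lcoef L w.
Proof. apply lpair_scale. Qed.

Lemma lpair_single phi k x : lpair phi [(k, x)] = k * phi x.
Proof. simpl; ring. Qed.

Lemma lpair_ext phi psi L : (forall u, phi u = psi u) -> lpair phi L = lpair psi L.
Proof. intro H; induction L; simpl; auto. rewrite IHL, H; auto. Qed.

Lemma lpair_add phi psi L : lpair (fun u => phi u + psi u) L = lpair phi L + lpair psi L.
Proof. induction L; simpl; auto. rewrite IHL; ring. Qed.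

Lemma lpair_mul_l c phi L : lpair (fun u => c * phi u) L = c * lpair phi L.
Proof. induction L; simpl; [lia|]. rewrite IHL; ring. Qed.

Lemma lpair_seq n (a : nat -> Z) (x : nat -> list V) phi :
  lpair phi (map (fun i => (a i, x i)) (seq 0 n)) = zsum n (fun i => a i * phi (x i)).
Proof.
  induction n; auto.
  rewrite seq_S, map_app, lpair_app, IHn. simpl. lia.
Qed.

Lemma delta_refl x : delta x x = 1.
Proof. unfold delta. destruct (excluded_middle_informative (x = x)); congruence. Qed.

Lemma delta_neq x w : x <> w -> delta x w = 0.
Proof. unfold delta. destruct (excluded_middle_informative (x = w)); congruence. Qed.

Section Sift.
Variable v : list V.
Definition on_v (p : Z * list V) : bool :=
  if excluded_middle_informative (snd p = v) then true else false.
Definition off_v (p : Z * list V) : bool := negb (on_v p).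

Lemma lpair_sift phi L : lpair phi L = lpair phi (filter on_v L) + lpair phi (filter off_v L).
Proof.
  induction L as [|p L IH]; simpl; auto.
  unfold off_v in *. destruct (on_v p); simpl; lia.
Qed.

Lemma lpair_on_v phi L : lpair phi (filter on_v L) = lcoef (filter on_v L) v * phi v.
Proof.
  unfold lcoef. induction L as [|[k u] L IH]; simpl; [lia|].
  destruct (on_v (k, u)) eqn:Hu; simpl; auto.
  unfold on_v in Hu; simpl in Hu. destruct (excluded_middle_informative (u = v)); [|discriminate].
  subst. rewrite IH, delta_refl. ring.
Qed.

Lemma lcoef_off_v L : lcoef (filter off_v L) v = 0.
Proof.
  unfold lcoef. induction L as [|[k u] L IH]; simpl; auto.
  destruct (off_v (k, u)) eqn:Hu; simpl; auto.
  unfold off_v, on_v in Hu; simpl in Hu.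
  destruct (excluded_middle_informative (u = v)); [discriminate|].
  rewrite IH, delta_neq; auto; lia.
Qed.
End Sift.

(* The pairing of a chain with a function only depends on its coefficients:
   the terms on the first vertex list [v] contribute [lcoef L v * phi v = 0],
   and the remaining terms form a shorter null chain. *)
Lemma lpair_null phi L : lceq L [] -> lpair phi L = 0.
Proof.
  induction L as [L IH]
    using (well_founded_induction (Wf_nat.well_founded_ltof _ (@length _))).
  destruct L as [|[k v] L']; intro HL; [reflexivity|].
  set (L := (k, v) :: L') in *.
  assert (Hcoef : forall w, lcoef L w = lcoef (filter (on_v v) L) v * delta v w
                                       + lcoef (filter (off_v v) L) w).
  { intro w. unfold lcoef at 1. rewrite (lpair_sift v). fold (lcoef (filter (off_v v) L) w).
    rewrite lpair_on_v. reflexivity. }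
  assert (Hv : lcoef (filter (on_v v) L) v = 0).
  { pose proof (Hcoef v) as E. rewrite HL, lcoef_nil, lcoef_off_v, delta_refl in E. lia. }
  assert (Hnull : lceq (filter (off_v v) L) []).
  { intro w. pose proof (Hcoef w) as E. rewrite HL, Hv, lcoef_nil in E. rewrite lcoef_nil. lia. }
  rewrite (lpair_sift v), lpair_on_v, Hv, (IH _); [lia| |exact Hnull].
  assert (Hk : off_v v (k, v) = false).
  { unfold off_v, on_v; simpl.
    destruct (excluded_middle_informative (v = v)); [reflexivity|congruence]. }
  unfold L, Wf_nat.ltof; cbn [filter]. rewrite Hk.
  pose proof (filter_length_le (off_v v) L'). simpl. lia.
Qed.

Lemma lpair_resp phi L1 L2 : lceq L1 L2 -> lpair phi L1 = lpair phi L2.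
Proof.
  intro H. assert (H0 : lceq (L1 ++ lscale (-1) L2) []).
  { intro u. rewrite lcoef_app, lcoef_scale, H, lcoef_nil. lia. }
  pose proof (lpair_null phi _ H0) as E. rewrite lpair_app, lpair_scale in E. lia.
Qed.
End VertexChains.

Definition lext {V W : Type} (f : list V -> lchain (V := W)) (L : lchain (V := V)) : lchain :=
  flat_map (fun p => lscale (fst p) (f (snd p))) L.

Definition lmap {V W : Type} (F : V -> W) (v : list V) : lchain := [(1, map F v)].

Section LinearExtension.
Context {V W : Type}.

Lemma lpair_lext phi (f : list V -> lchain (V := W)) L :
  lpair phi (lext f L) = lpair (fun v => lpair phi (f v)) L.
Proof.
  induction L as [|[k v] L IH]; simpl; auto.
  rewrite lpair_app, lpair_scale, IH. reflexivity.
Qed.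

Lemma lcoef_lext (f : list V -> lchain (V := W)) L w :
  lcoef (lext f L) w = lpair (fun v => lcoef (f v) w) L.
Proof. apply lpair_lext. Qed.

Lemma lpair_lmap phi (F : V -> W) v : lpair phi (lmap F v) = phi (map F v).
Proof. unfold lmap. rewrite lpair_single. ring. Qed.

Lemma lcoef_lext_scale (f : list V -> lchain (V := W)) k L w :
  lcoef (lext f (lscale k L)) w = k * lcoef (lext f L) w.
Proof. rewrite !lcoef_lext, lpair_scale. reflexivity. Qed.

Lemma lext_resp (f : list V -> lchain (V := W)) L1 L2 :
  lceq L1 L2 -> lceq (lext f L1) (lext f L2).
Proof. intros H w. rewrite !lcoef_lext. apply lpair_resp, H. Qed.

Lemma lext_null (f : list V -> lchain (V := W)) L : lceq L [] -> lceq (lext f L) [].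
Proof. apply lext_resp. Qed.

End LinearExtension.

Lemma lext_lext {U V W : Type}
  (f : list V -> lchain (V := W)) (g : list U -> lchain (V := V)) L :
  lceq (lext f (lext g L)) (lext (fun v => lext f (g v)) L).
Proof.
  intro w. rewrite !lcoef_lext, lpair_lext. apply lpair_ext. intro v.
  symmetry. apply lcoef_lext.
Qed.

Lemma lext_lmap_id {V : Type} (L : lchain (V := V)) : lceq (lext (lmap (fun x => x)) L) L.
Proof.
  intro w. rewrite lcoef_lext. apply lpair_ext. intro v.
  unfold lcoef. rewrite lpair_lmap, map_id. reflexivity.
Qed.

Lemma lext_lmap_comp {U V W : Type} (F : U -> V) (G : V -> W) L :
  lceq (lext (lmap G) (lext (lmap F) L)) (lext (lmap (fun x => G (F x))) L).
Proof.
  intro w. rewrite lext_lext, !lcoef_lext. apply lpair_ext. intro v.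
  unfold lcoef. rewrite lpair_lext, !lpair_lmap, map_map. reflexivity.
Qed.

Lemma lext_lbd_lmap {V W : Type} (F : V -> W) L :
  lceq (lext lbd (lext (lmap F) L)) (lext (lmap F) (lext lbd L)).
Proof.
  intro w. rewrite lext_lext, (lext_lext (lmap F)), !lcoef_lext. apply lpair_ext. intro v.
  unfold lcoef. rewrite !lpair_lext, lpair_lmap.
  unfold lbd. rewrite !lpair_seq, length_map.
  apply zsum_ext. intros i _. rewrite lpair_lmap, remove_nth_map. reflexivity.
Qed.

Section Prism.
Variables (V : Type) (F G : V -> V).

(* [mixmap i v] applies [F] to the first [i] vertices and [G] to the others;
   [prism i v] is the [i]-th simplex of the triangulated prism [v x [0,1]]. *)
Definition mixmap (i : nat) (v : list V) : list V := map F (firstn i v) ++ map G (skipn i v).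
Definition prism (i : nat) (v : list V) : list V :=
  map F (firstn (S i) v) ++ map G (skipn i v).

Definition prism_op (v : list V) : lchain :=
  map (fun i => (sgn i, prism i v)) (seq 0 (length v)).

Lemma prism_length i v : (i < length v)%nat -> length (prism i v) = S (length v).
Proof.
  intro H. unfold prism. rewrite length_app, !length_map, length_firstn, length_skipn. lia.
Qed.

Lemma prism_nil i : prism i [] = [].
Proof. unfold prism. rewrite firstn_nil, skipn_nil. reflexivity. Qed.

Lemma mixmap_nil i : mixmap i [] = [].
Proof. unfold mixmap. rewrite firstn_nil, skipn_nil. reflexivity. Qed.

Lemma prism_0 a v : prism 0 (a :: v) = F a :: map G (a :: v).
Proof. reflexivity. Qed.

Lemma prism_S i a v : prism (S i) (a :: v) = F a :: prism i v.
Proof. reflexivity. Qed.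

Lemma mixmap_S i a v : mixmap (S i) (a :: v) = F a :: mixmap i v.
Proof. reflexivity. Qed.

Lemma mixmap_0 v : mixmap 0 v = map G v.
Proof. reflexivity. Qed.

Lemma mixmap_length v : mixmap (length v) v = map F v.
Proof. unfold mixmap. rewrite firstn_all, skipn_all, app_nil_r. reflexivity. Qed.

Lemma remove_prism_before i j v :
  (j < i)%nat -> remove_nth j (prism i v) = prism (pred i) (remove_nth j v).
Proof.
  revert i j; induction v as [|a v IH]; intros [|i] [|j] H; try lia;
    rewrite ?prism_nil; try reflexivity.
  rewrite prism_S, remove_nth_S_cons, IH by lia.
  destruct i; [lia|]. reflexivity.
Qed.

Lemma remove_prism_at i v : remove_nth i (prism i v) = mixmap i v.
Proof.
  revert i; induction v as [|a v IH]; intros [|i];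
    rewrite ?prism_nil, ?mixmap_nil; try reflexivity.
  rewrite prism_S, mixmap_S, remove_nth_S_cons, IH. reflexivity.
Qed.

Lemma remove_prism_next i v : remove_nth (S i) (prism i v) = mixmap (S i) v.
Proof.
  revert i; induction v as [|a v IH]; intros [|i];
    rewrite ?prism_nil, ?mixmap_nil; try reflexivity.
  rewrite prism_S, mixmap_S, remove_nth_S_cons, IH. reflexivity.
Qed.

Lemma remove_prism_after i k v :
  remove_nth (S (S (i + k))) (prism i v) = prism i (remove_nth (S (i + k)) v).
Proof.
  revert i; induction v as [|a v IH]; intros [|i];
    rewrite ?prism_nil; try reflexivity.
  - simpl. rewrite remove_nth_map. reflexivity.
  - change (S i + k)%nat with (S (i + k)).
    rewrite prism_S, !remove_nth_S_cons, prism_S, IH. reflexivity.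
Qed.

Section PrismIdentity.
Variables (v w : list V) (m : nat).
Hypothesis Hlen : length v = S m.

Let Y i k := delta (prism i (remove_nth k v)) w.
Let A i := delta (mixmap i v) w.

(* Faces of [prism i v]: those before [i] are prisms of faces of [v], the
   faces [i] and [i+1] are the stairs [mixmap i v] and [mixmap (i+1) v], and
   those after [i+1] are again prisms of faces of [v]. *)
Lemma lcoef_bd_prism_op :
  lcoef (lext lbd (prism_op v)) w =
  zsum (S m) (fun i => sgn i * zsum i (fun j => sgn j * Y (pred i) j))
  + zsum (S m) (fun i => A i - A (S i))
  + zsum (S m) (fun i => sgn i * zsum (m - i) (fun k => sgn (S (S (i + k))) * Y i (S (i + k)))).
Proof.
  unfold prism_op. rewrite Hlen, lcoef_lext, lpair_seq, <- !zsum_add.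
  apply zsum_ext. intros i Hi.
  unfold lcoef, lbd. rewrite lpair_seq, prism_length, Hlen by lia.
  replace (S (S m)) with (i + (2 + (m - i)))%nat by lia.
  rewrite !zsum_split. cbn [zsum].
  rewrite Nat.add_0_r, remove_prism_at, Nat.add_1_r, remove_prism_next.
  rewrite (zsum_ext i _ (fun j => sgn j * Y (pred i) j)).
  2:{ intros j Hj. unfold Y. rewrite remove_prism_before by lia. reflexivity. }
  rewrite (zsum_ext (m - i) _ (fun k => sgn (S (S (i + k))) * Y i (S (i + k)))).
  2:{ intros k Hk. replace (i + (2 + k))%nat with (S (S (i + k))) by lia.
      unfold Y. rewrite remove_prism_after. reflexivity. }
  rewrite sgn_S. unfold A. pose proof (sgn_sq i) as Hs. set (s := sgn i) in *.
  match goal with |- s * (?x + (0 + s * ?y + - s * ?z + ?u)) = _ =>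
    transitivity (s * x + (s * s) * y - (s * s) * z + s * u); [ring|rewrite Hs; ring] end.
Qed.

Lemma lcoef_prism_op_bd :
  lcoef (lext prism_op (lbd v)) w =
  zsum m (fun i => sgn i * zsum (S i) (fun k => sgn k * Y i k))
  + zsum m (fun i => sgn i * zsum (m - i) (fun k => sgn (S (i + k)) * Y i (S (i + k)))).
Proof.
  unfold lbd. rewrite Hlen, lcoef_lext, lpair_seq.
  rewrite (zsum_ext (S m) _ (fun k => zsum m (fun i => sgn k * (sgn i * Y i k)))).
  2:{ intros k Hk. unfold lcoef, prism_op. rewrite lpair_seq, remove_nth_length, Hlen by lia.
      simpl pred. rewrite <- zsum_mul_l. reflexivity. }
  rewrite zsum_swap, <- zsum_add. apply zsum_ext. intros i Hi.
  replace (S m) with (S i + (m - i))%nat at 1 by lia. rewrite zsum_split, <- !zsum_mul_l.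
  f_equal; apply zsum_ext; intros; simpl; ring.
Qed.

Lemma prism_identity_of_length :
  lcoef (lext lbd (prism_op v)) w + lcoef (lext prism_op (lbd v)) w
  = delta (map G v) w - delta (map F v) w.
Proof.
  rewrite lcoef_bd_prism_op, lcoef_prism_op_bd, zsum_telescope.
  unfold A. rewrite mixmap_0, <- Hlen, mixmap_length, Hlen.
  assert (E1 : zsum (S m) (fun i => sgn i * zsum i (fun j => sgn j * Y (pred i) j))
               = - zsum m (fun i => sgn i * zsum (S i) (fun k => sgn k * Y i k))).
  { rewrite zsum_shift, <- zsum_opp. cbn [zsum]. rewrite Z.mul_0_r, Z.add_0_l.
    apply zsum_ext; intros. rewrite sgn_S. change (pred (S i)) with i. ring. }
  assert (E2 :
    zsum (S m) (fun i => sgn i * zsum (m - i) (fun k => sgn (S (S (i + k))) * Y i (S (i + k))))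
    = - zsum m (fun i => sgn i * zsum (m - i) (fun k => sgn (S (i + k)) * Y i (S (i + k))))).
  { cbn [zsum]. rewrite Nat.sub_diag, <- zsum_opp. cbn [zsum]. rewrite Z.mul_0_r, Z.add_0_r.
    apply zsum_ext; intros. rewrite <- !zsum_mul_l, <- zsum_opp.
    apply zsum_ext; intros. rewrite (sgn_S (S (_ + _))). ring. }
  rewrite E1, E2. ring.
Qed.
End PrismIdentity.

(* The prism operator is a chain homotopy from [map F] to [map G]. *)
Lemma prism_identity v w :
  lcoef (lext lbd (prism_op v)) w + lcoef (lext prism_op (lbd v)) w
  = delta (map G v) w - delta (map F v) w.
Proof.
  destruct v as [|a v].
  - simpl. ring.
  - apply (prism_identity_of_length _ _ (length v)). reflexivity.
Qed.
End Prism.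

(** * Nerves of thin categories *)

Section ThinNerve.
Variable C : cat.

Definition arr (a b : ob C) : Prop := inhabited (hom C a b).
Definition thin : Prop := forall a b (f g : hom C a b), f = g.

Fixpoint seg_vertices (n : nat) : forall a, seg C n a -> list (ob C) :=
  match n return forall a, seg C n a -> list (ob C) with
  | O => fun _ _ => []
  | S m => fun a s => projT1 s :: seg_vertices m (projT1 s) (snd (projT2 s))
  end.

Definition vertices n (s : simplex C n) : list (ob C) :=
  projT1 s :: seg_vertices n (projT1 s) (projT2 s).

Fixpoint arr_path (a : ob C) (l : list (ob C)) : Prop :=
  match l with [] => True | b :: l' => arr a b /\ arr_path b l' end.

Definition composable (l : list (ob C)) : Prop :=
  match l with [] => False | a :: l' => arr_path a l' end.

Definition pick_hom a b (H : arr a b) : hom C a b :=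
  proj1_sig (constructive_indefinite_description (fun _ : hom C a b => True)
    (match H with inhabits f => ex_intro _ f I end)).

(* The [seg] realising a composable vertex list; the identity-padded
   fallback branches are never taken on composable lists. *)
Fixpoint seg_of_vertices (n : nat) : forall a, list (ob C) -> seg C n a :=
  match n return forall a, list (ob C) -> seg C n a with
  | O => fun _ _ => tt
  | S m => fun a l =>
      match excluded_middle_informative (arr a (hd a l)) with
      | left H => existT _ (hd a l) (pick_hom _ _ H, seg_of_vertices m (hd a l) (tl l))
      | right _ => existT _ a (cid a, seg_of_vertices m a (tl l))
      end
  end.

Definition simplex_of (x0 : ob C) n (l : list (ob C)) : simplex C n :=
  existT _ (hd x0 l) (seg_of_vertices n (hd x0 l) (tl l)).

Lemma seg_vertices_length n a s : length (seg_vertices n a s) = n.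
Proof. revert a s; induction n; intros; simpl; auto. Qed.

Lemma vertices_length n s : length (vertices n s) = S n.
Proof. unfold vertices; simpl; rewrite seg_vertices_length; auto. Qed.

Lemma vertices_composable n s : composable (vertices n s).
Proof.
  destruct s as [a s]; unfold vertices; simpl. revert a s.
  induction n; intros a s; simpl; auto. destruct s as [b [f t]]; simpl.
  split; [constructor; exact f | apply IHn].
Qed.

Lemma seg_vertices_of n a l :
  arr_path a l -> length l = n -> seg_vertices n a (seg_of_vertices n a l) = l.
Proof.
  revert a l; induction n; intros a [|b l] Hl Hn; simpl in *; try discriminate; auto.
  destruct Hl as [Hab Hl].
  destruct (excluded_middle_informative (arr a b)) as [h|h]; [|contradiction].
  simpl. f_equal. apply IHn; auto.
Qed.

Lemma vertices_simplex_of x0 n l :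
  composable l -> length l = S n -> vertices n (simplex_of x0 n l) = l.
Proof.
  destruct l as [|a l]; simpl; intros Hl Hn; [contradiction|].
  unfold vertices, simplex_of; simpl. rewrite seg_vertices_of; auto.
Qed.

Lemma seg_vertices_del n a (s : seg C (S n) a) k :
  (k <= n)%nat -> seg_vertices n a (del s k) = remove_nth k (seg_vertices (S n) a s).
Proof.
  revert a s k; induction n; intros a s k Hk.
  - destruct s as [b [f t]]. simpl. destruct k; [reflexivity|lia].
  - destruct s as [b [f [c [g t]]]]. destruct k as [|k]; [reflexivity|].
    simpl. f_equal. rewrite IHn by lia. reflexivity.
Qed.

Lemma vertices_face n i (s : simplex C (S n)) :
  (i <= S n)%nat -> vertices n (face i s) = remove_nth i (vertices (S n) s).
Proof.
  intro Hi. destruct i as [|j]; destruct s as [a [b [f t]]]; unfold vertices; simpl; auto.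
  f_equal. rewrite seg_vertices_del by lia. reflexivity.
Qed.

Hypothesis Hthin : thin.

Lemma vertices_inj n s s' : vertices n s = vertices n s' -> s = s'.
Proof.
  destruct s as [a t], s' as [a' t']; unfold vertices; simpl; intro H.
  injection H as <- Ht. f_equal. revert a t t' Ht.
  induction n; intros a t t' Ht; [destruct t, t'; auto|].
  destruct t as [b [f t]], t' as [b' [f' t']]. simpl in Ht. injection Ht as <- Ht.
  rewrite (Hthin _ _ f f'), (IHn _ _ _ Ht). reflexivity.
Qed.
End ThinNerve.

Definition vertex_chain (C : cat) n (c : chain C n) : lchain :=
  map (fun p => (fst p, vertices C n (snd p))) c.

Section ThinChains.
Variable C : cat.
Hypothesis Hthin : thin C.

Lemma coef_vertex_chain n (c : chain C n) t :
  coef c t = lcoef (vertex_chain C n c) (vertices C n t).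
Proof.
  induction c as [|[k s] c IH]; simpl; auto. rewrite IH. unfold lcoef, delta. simpl.
  destruct (excluded_middle_informative (vertices C n s = vertices C n t)) as [E|E];
  destruct (excluded_middle_informative (s = t)) as [Hst|Hst]; subst; try lia.
  - apply vertices_inj in E; tauto.
  - congruence.
Qed.

Lemma lcoef_vertex_chain_out n (c : chain C n) w :
  (forall t, vertices C n t <> w) -> lcoef (vertex_chain C n c) w = 0.
Proof.
  intro H. induction c as [|[k s] c IH]; simpl; auto. unfold lcoef in *; simpl.
  rewrite IH, delta_neq; auto. lia.
Qed.

Lemma coef_eq_iff_lceq n (c1 c2 : chain C n) :
  (forall t, coef c1 t = coef c2 t) <-> lceq (vertex_chain C n c1) (vertex_chain C n c2).
Proof.
  split; intros H.
  - intro w. destruct (classic (exists t, vertices C n t = w)) as [[t <-]|Hn].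
    + rewrite <- !coef_vertex_chain; auto.
    + rewrite !lcoef_vertex_chain_out; auto; intros t Ht; apply Hn; eauto.
  - intro t. rewrite !coef_vertex_chain. apply H.
Qed.

Lemma cycle_iff_lceq n (c : chain C n) :
  (forall t, coef c t = 0) <-> lceq (vertex_chain C n c) [].
Proof. apply (coef_eq_iff_lceq n c []). Qed.

Lemma vertex_chain_bd n (c : chain C (S n)) :
  vertex_chain C n (bd c) = lext lbd (vertex_chain C (S n) c).
Proof.
  induction c as [|[k s] c IH]; [reflexivity|]. unfold bd, lext, vertex_chain in *.
  cbn [flat_map fst snd map]. rewrite map_app, IH. f_equal.
  unfold lbd, lscale. rewrite vertices_length, !map_map. apply map_ext_in.
  intros i Hi. apply in_seq in Hi. cbn [fst snd].
  rewrite vertices_face, Z.mul_comm by lia. reflexivity.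
Qed.
End ThinChains.

Lemma vertex_chain_app C n (c1 c2 : chain C n) :
  vertex_chain C n (c1 ++ c2) = vertex_chain C n c1 ++ vertex_chain C n c2.
Proof. apply map_app. Qed.

Lemma bd_app C n (c1 c2 : chain C (S n)) : bd (c1 ++ c2) = bd c1 ++ bd c2.
Proof. apply flat_map_app. Qed.

Definition chain_scale {C : cat} {n} (k : Z) (c : chain C n) : chain C n :=
  map (fun p => (k * fst p, snd p)) c.

Lemma vertex_chain_scale C n k (c : chain C n) :
  vertex_chain C n (chain_scale k c) = lscale k (vertex_chain C n c).
Proof. unfold vertex_chain, chain_scale, lscale. rewrite !map_map. reflexivity. Qed.

Definition monotone {C D : cat} (F : ob C -> ob D) : Prop :=
  forall a b, arr C a b -> arr D (F a) (F b).

Lemma arr_path_map {C D : cat} (F : ob C -> ob D) :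
  monotone F -> forall l a, arr_path C a l -> arr_path D (F a) (map F l).
Proof. intros HF; induction l; simpl; intros; auto. destruct H; split; auto. Qed.

Lemma composable_map {C D : cat} (F : ob C -> ob D) :
  monotone F -> forall l, composable C l -> composable D (map F l).
Proof. intros HF [|a l]; simpl; auto. apply arr_path_map; auto. Qed.

Definition map_chain {C D : cat} (xD : ob D) (F : ob C -> ob D) n (z : chain C n) :
  chain D n :=
  map (fun p => (fst p, simplex_of D xD n (map F (vertices C n (snd p))))) z.

Lemma vertex_chain_map_chain {C D : cat} xD (F : ob C -> ob D) n (z : chain C n) :
  monotone F ->
  vertex_chain D n (map_chain xD F n z) = lext (lmap F) (vertex_chain C n z).
Proof.
  intro HF. induction z as [|[k s] z IH]; [reflexivity|].
  unfold map_chain, vertex_chain, lext in *. cbn [map flat_map fst snd]. rewrite IH.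
  unfold lmap, lscale. cbn [map fst snd app]. rewrite vertices_simplex_of, Z.mul_1_r; auto.
  - apply composable_map; auto. apply vertices_composable.
  - rewrite length_map, vertices_length. reflexivity.
Qed.

Section PrismHomotopy.
Variable C : cat.
Hypothesis Hthin : thin C.
Variable x0 : ob C.
Variables F G : ob C -> ob C.
Hypotheses (HF : monotone F) (HG : monotone G).
Hypothesis HFG : forall x, arr C (F x) (G x).

Lemma prism_composable i l : composable C l -> composable C (prism _ F G i l).
Proof.
  destruct l as [|a l]; [contradiction|]. intro H. revert i a H.
  induction l as [|b l IH]; intros [|i] a H.
  - rewrite prism_0. cbn. split; auto.
  - rewrite prism_S, prism_nil. exact I.
  - rewrite prism_0. cbn [composable arr_path]. split; auto. apply arr_path_map; auto.
  - destruct H as [Hab Hl]. rewrite prism_S.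
    assert (Hb : exists t, prism _ F G i (b :: l) = F b :: t)
      by (destruct i; eexists; reflexivity).
    destruct Hb as [t Ht]. specialize (IH i b Hl). rewrite Ht in IH |- *.
    cbn [composable arr_path] in *. split; auto.
Qed.

Definition prism_chain n (z : chain C n) : chain C (S n) :=
  flat_map (fun p => map (fun i => (fst p * sgn i,
      simplex_of C x0 (S n) (prism _ F G i (vertices C n (snd p))))) (seq 0 (S n))) z.

Lemma vertex_chain_prism_chain n (z : chain C n) :
  vertex_chain C (S n) (prism_chain n z) = lext (prism_op _ F G) (vertex_chain C n z).
Proof.
  induction z as [|[k s] z IH]; [reflexivity|]. unfold prism_chain, lext, vertex_chain in *.
  cbn [flat_map fst snd map]. rewrite map_app, IH. f_equal.
  unfold prism_op, lscale. rewrite vertices_length, !map_map. apply map_ext_in.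
  intros i Hi. apply in_seq in Hi. cbn [fst snd]. rewrite vertices_simplex_of.
  - reflexivity.
  - apply prism_composable, vertices_composable.
  - rewrite prism_length; rewrite ?vertices_length; lia.
Qed.

Lemma prism_homotopy n (z : chain C (S n)) :
  (forall t, coef (bd z) t = 0) ->
  exists b : chain C (S (S n)),
    lceq (vertex_chain C (S n) (bd b))
         (lext (lmap G) (vertex_chain C (S n) z)
          ++ lscale (-1) (lext (lmap F) (vertex_chain C (S n) z))).
Proof.
  intro Hz. apply cycle_iff_lceq in Hz; auto. rewrite vertex_chain_bd in Hz by auto.
  exists (prism_chain (S n) z). rewrite vertex_chain_bd, vertex_chain_prism_chain by auto.
  set (L := vertex_chain C (S n) z) in *. intro w.
  pose proof (lext_null (prism_op _ F G) _ Hz w) as E0.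
  rewrite lcoef_nil, lext_lext, lcoef_lext in E0.
  rewrite lcoef_app, lcoef_scale, lext_lext, !lcoef_lext.
  rewrite <- (Z.add_0_r (_ + _)), <- (Z.mul_0_r (-1)), <- E0, <- !lpair_mul_l, <- !lpair_add.
  apply lpair_ext. intro v. pose proof (prism_identity _ F G v w) as E.
  unfold lcoef in *. rewrite !lpair_lmap. lia.
Qed.
End PrismHomotopy.

Definition acyclic (C : cat) : Prop := connected C /\ colim_pos_vanish C.

(* [C] is a homotopy retract of [D]: [i o r] is joined to the identity by
   the zigzag of natural transformations [id => K <= i o r]. *)
Definition htpy_dominated (C D : cat) : Prop :=
  exists (r : ob C -> ob D) (i : ob D -> ob C) (K : ob C -> ob C),
    monotone r /\ monotone i /\ monotone K /\
    (forall x, arr C x (K x)) /\ (forall x, arr C (i (r x)) (K x)).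

Lemma connected_of_dominated C D : htpy_dominated C D -> connected D -> connected C.
Proof.
  intros (r & i & K & _ & Hi & _ & HK & HiK) [[d0] HD]. split; [constructor; exact (i d0)|].
  assert (Hx : forall x, clos_refl_sym_trans (ob C) (arr C) x (i (r x))).
  { intro x. eapply rst_trans; [apply rst_step, HK | apply rst_sym, rst_step, HiK]. }
  intros x y. eapply rst_trans; [apply Hx|]. eapply rst_trans; [|apply rst_sym, Hx].
  specialize (HD (r x) (r y)). clear -HD Hi. induction HD.
  - apply rst_step, Hi; auto.
  - apply rst_refl.
  - apply rst_sym; auto.
  - eapply rst_trans; eauto.
Qed.

Lemma chain_map_cycle {C D : cat} (HC : thin C) (HD : thin D) xD (F : ob C -> ob D) n
  (z : chain C (S n)) :
  monotone F -> (forall t, coef (bd z) t = 0) ->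
  forall t, coef (bd (map_chain xD F (S n) z)) t = 0.
Proof.
  intros HF Hz. apply cycle_iff_lceq in Hz; auto. apply cycle_iff_lceq; auto.
  rewrite vertex_chain_bd, vertex_chain_map_chain by auto. rewrite vertex_chain_bd in Hz by auto.
  intro w. rewrite lext_lbd_lmap. apply (lext_null _ _ Hz).
Qed.

Lemma colim_pos_vanish_of_dominated C D :
  thin C -> thin D -> htpy_dominated C D -> inhabited (ob D) ->
  colim_pos_vanish D -> colim_pos_vanish C.
Proof.
  intros HC HD (r & i & K & Hr & Hi & HK & HidK & HirK) [xD] HvD n z Hz.
  set (xC := i xD). set (L := vertex_chain C (S n) z).
  destruct (prism_homotopy C HC xC (fun x => x) K (fun a b h => h) HK HidK n z Hz) as [b1 Hb1].
  destruct (prism_homotopy C HC xC (fun x => i (r x)) K (fun a b h => Hi _ _ (Hr _ _ h))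
              HK HirK n z Hz) as [b2 Hb2].
  destruct (HvD n _ (chain_map_cycle HC HD xD r n z Hr Hz)) as [b3 Hb3].
  apply coef_eq_iff_lceq in Hb3; auto.
  set (b4 := map_chain xC i (S (S n)) b3).
  assert (Hb4 : lceq (vertex_chain C (S n) (bd b4)) (lext (lmap (fun x => i (r x))) L)).
  { intro w. unfold b4. rewrite vertex_chain_bd, vertex_chain_map_chain by auto.
    rewrite lext_lbd_lmap, <- vertex_chain_bd, (lext_resp _ _ _ Hb3) by auto.
    rewrite vertex_chain_map_chain by auto.
    apply lext_lmap_comp. }
  (* [z ~ K z ~ i (r z)], and [i (r z)] bounds because [r z] does. *)
  exists (b2 ++ chain_scale (-1) b1 ++ b4). apply coef_eq_iff_lceq; auto. intro w.
  rewrite !bd_app, !vertex_chain_app, !lcoef_app, Hb2, Hb4, vertex_chain_bd,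
    vertex_chain_scale, lcoef_lext_scale, <- vertex_chain_bd, Hb1 by auto.
  rewrite !lcoef_app, !lcoef_scale. fold L. rewrite (lext_lmap_id L w). ring.
Qed.

Lemma acyclic_of_dominated C D :
  thin C -> thin D -> htpy_dominated C D -> acyclic D -> acyclic C.
Proof.
  intros HC HD Hdom [Hconn Hvan]. split.
  - apply (connected_of_dominated C D); auto.
  - apply (colim_pos_vanish_of_dominated C D); auto. apply Hconn.
Qed.

Lemma lcoef_lbd_repeat {V} (x : V) k w :
  lcoef (lbd (repeat x k)) w = zsum k sgn * delta (repeat x (pred k)) w.
Proof.
  unfold lcoef, lbd. rewrite lpair_seq, repeat_length, Z.mul_comm, <- zsum_mul_l.
  apply zsum_ext. intros i Hi. rewrite remove_nth_repeat by lia. ring.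
Qed.

Section Singleton.
Variable C : cat.
Hypothesis HC : thin C.
Variable x0 : ob C.
Hypothesis Hall : forall x y : ob C, x = y.

Lemma vertices_singleton k t : vertices C k t = repeat x0 (S k).
Proof.
  rewrite <- (vertices_length C k t). generalize (vertices C k t).
  induction l; simpl; auto. rewrite (Hall a x0). f_equal. exact IHl.
Qed.

Lemma vertex_chain_singleton k (c : chain C k) :
  lceq (vertex_chain C k c) [(lcoef (vertex_chain C k c) (repeat x0 (S k)), repeat x0 (S k))].
Proof.
  intro w. unfold lcoef at 2. rewrite lpair_single.
  destruct (excluded_middle_informative (repeat x0 (S k) = w)) as [<-|Hw].
  - rewrite delta_refl. ring.
  - rewrite delta_neq, lcoef_vertex_chain_out; auto; [ring|].
    intro t. rewrite vertices_singleton. exact Hw.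
Qed.

Lemma colim_pos_vanish_singleton : colim_pos_vanish C.
Proof.
  intros n z Hz. apply cycle_iff_lceq in Hz; auto.
  set (L := vertex_chain C (S n) z) in *. set (R := repeat x0 (S (S n))).
  set (s := lcoef L R).
  assert (HL : lceq L [(s, R)]) by apply vertex_chain_singleton.
  assert (Hs : s * zsum (S (S n)) sgn = 0).
  { pose proof (Hz (repeat x0 (S n))) as E. rewrite vertex_chain_bd in E by auto.
    fold L in E. rewrite (lext_resp lbd _ _ HL), lcoef_nil in E.
    unfold lext in E. cbn [flat_map fst snd] in E. rewrite app_nil_r, lcoef_scale in E.
    unfold R in E. rewrite lcoef_lbd_repeat, delta_refl in E. lia. }
  (* the degenerate (n+2)-simplex on [x0] has boundary [R] when [n] is even *)
  exists [(if Nat.even n then s else 0, simplex_of C x0 (S (S n)) (repeat x0 (S (S (S n)))))].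
  apply coef_eq_iff_lceq; auto. fold L. rewrite vertex_chain_bd by auto. intro w.
  rewrite HL. unfold vertex_chain. cbn [map fst snd]. rewrite vertices_singleton.
  unfold lext. cbn [flat_map fst snd]. rewrite app_nil_r, lcoef_scale, lcoef_lbd_repeat.
  unfold lcoef; rewrite lpair_single.
  rewrite !zsum_sgn in *. change (Nat.even (S (S (S n)))) with (Nat.even (S n)).
  change (Nat.even (S (S n))) with (Nat.even n) in Hs.
  rewrite Nat.even_succ, <- Nat.negb_even.
  unfold R. destruct (Nat.even n); cbn [negb pred] in *; [ring | replace s with 0 by lia; ring].
Qed.

Lemma acyclic_singleton : acyclic C.
Proof.
  split; [|apply colim_pos_vanish_singleton].
  split; [constructor; exact x0|]. intros x y. rewrite (Hall x y). apply rst_refl.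
Qed.
End Singleton.

Close Scope Z_scope.

(** * Trace monoids *)

Definition classic_eq_dec {A : Type} (x y : A) : {x = y} + {x <> y} :=
  excluded_middle_informative (x = y).

Section Words.
Variables (E : Type) (I : E -> E -> Prop).
Hypothesis I_irrefl : forall a, ~ I a a.
Hypothesis I_sym : forall a b, I a b -> I b a.

Notation occ w a := (count_occ classic_eq_dec w a).

Lemma teq_occ a u v : teq I u v -> occ u a = occ v a.
Proof.
  induction 1 as [u v (x & y & p & q & _ & -> & ->)| | |]; try lia.
  rewrite !count_occ_app. simpl. destruct (classic_eq_dec p a), (classic_eq_dec q a); lia.
Qed.

Lemma teq_length u v : teq I u v -> length u = length v.
Proof.
  induction 1 as [u v (x & y & p & q & _ & -> & ->)| | |]; try lia.
  rewrite !length_app. simpl. lia.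
Qed.

Lemma teq_of_cls_eq u v : cls I u = cls I v -> teq I u v.
Proof.
  intro H. assert (Hv : tcls I v v) by apply rst_refl.
  change (proj1_sig (cls I v) v) in Hv. rewrite <- H in Hv. exact Hv.
Qed.

Lemma teq_rev u v : teq I u v -> teq I (rev u) (rev v).
Proof.
  induction 1 as [u v (x & y & p & q & Hpq & -> & ->)| | |].
  - rewrite !rev_app_distr. simpl. rewrite <- !app_assoc. apply rst_step.
    exists (rev y), (rev x), q, p. auto.
  - apply rst_refl.
  - apply rst_sym; auto.
  - eapply rst_trans; eauto.
Qed.

Lemma teq_commute a w : (forall b, In b w -> I a b) -> teq I (a :: w) (w ++ [a]).
Proof.
  induction w as [|b w IH]; simpl; intros H; [apply rst_refl|].
  eapply rst_trans.
  - apply rst_step. exists [], w, a, b. auto.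
  - apply (teq_app_l (I := I) (u := a :: w) (v := w ++ [a]) [b]). apply IH; auto.
Qed.

(* For a dependent pair [a, b], the subword on the letters [a] and [b] is an
   invariant of the congruence. *)
Definition subword2 (a b : E) (w : list E) : list E :=
  filter (fun x => if classic_eq_dec x a then true
                   else if classic_eq_dec x b then true else false) w.

Lemma teq_subword2 a b u v : ~ I a b -> teq I u v -> subword2 a b u = subword2 a b v.
Proof.
  intros Hab. induction 1 as [u v (x & y & p & q & Hpq & -> & ->)| | |]; congruence || auto.
  unfold subword2. rewrite !filter_app. f_equal. simpl.
  destruct (classic_eq_dec p a), (classic_eq_dec q a), (classic_eq_dec p b), (classic_eq_dec q b);
    subst; auto; exfalso; eauto.
Qed.

Lemma teq_swap_indep a b : a <> b -> teq I [b; a] [a; b] -> I a b.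
Proof.
  intros Hne H. apply NNPP. intro Hn. apply (teq_subword2 a b _ _ Hn) in H.
  unfold subword2 in H. simpl in H.
  destruct (classic_eq_dec b a), (classic_eq_dec a a), (classic_eq_dec b b); congruence.
Qed.

Fixpoint del_last (a : E) (w : list E) : list E :=
  match w with
  | [] => []
  | x :: w' => if excluded_middle_informative (In a w') then x :: del_last a w'
               else if classic_eq_dec x a then w' else x :: w'
  end.

Lemma del_last_notin a w : ~ In a w -> del_last a w = w.
Proof.
  induction w as [|x w IH]; simpl; intros H; auto.
  destruct (excluded_middle_informative (In a w)); [tauto|].
  destruct (classic_eq_dec x a); [subst; tauto|auto].
Qed.

Lemma del_last_app a u v :
  del_last a (u ++ v) =
  if excluded_middle_informative (In a v) then u ++ del_last a v else del_last a u ++ v.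
Proof.
  induction u as [|x u IH]; simpl.
  - destruct (excluded_middle_informative (In a v)); auto. apply del_last_notin; auto.
  - rewrite IH. destruct (excluded_middle_informative (In a v)) as [Hv|Hv];
    destruct (excluded_middle_informative (In a (u ++ v))) as [Huv|Huv];
    rewrite in_app_iff in Huv.
    + reflexivity.
    + tauto.
    + destruct (excluded_middle_informative (In a u)); [reflexivity|tauto].
    + destruct (excluded_middle_informative (In a u)); [tauto|].
      destruct (classic_eq_dec x a); reflexivity.
Qed.

Lemma del_last_snoc a u : del_last a (u ++ [a]) = u.
Proof.
  rewrite del_last_app.
  destruct (excluded_middle_informative (In a [a])) as [_|h]; [|simpl in h; tauto].
  simpl. destruct (excluded_middle_informative False); [tauto|].
  destruct (classic_eq_dec a a); [apply app_nil_r|congruence].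
Qed.

Lemma del_last_snoc_neq a b u : a <> b -> del_last a (u ++ [b]) = del_last a u ++ [b].
Proof.
  intro H. rewrite del_last_app. destruct (excluded_middle_informative (In a [b])) as [h|]; auto.
  simpl in h. destruct h; [congruence|contradiction].
Qed.

Lemma del_last_step a u v : trace_step I u v -> teq I (del_last a u) (del_last a v).
Proof.
  intros (x & y & p & q & Hpq & -> & ->).
  assert (Hpq' : p <> q) by (intro; subst; eapply I_irrefl; eauto).
  replace (x ++ p :: q :: y) with ((x ++ [p; q]) ++ y) by (rewrite <- app_assoc; auto).
  replace (x ++ q :: p :: y) with ((x ++ [q; p]) ++ y) by (rewrite <- app_assoc; auto).
  rewrite !(del_last_app a (x ++ _) y). destruct (excluded_middle_informative (In a y)).
  - rewrite <- !app_assoc. apply rst_step. exists x, (del_last a y), p, q. auto.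
  - rewrite !del_last_app.
    destruct (excluded_middle_informative (In a [p; q])) as [h1|h1];
    destruct (excluded_middle_informative (In a [q; p])) as [h2|h2]; simpl in h1, h2.
    + simpl. repeat (destruct (excluded_middle_informative _) || destruct (classic_eq_dec _ _));
        simpl in *; subst; try tauto; try congruence; apply rst_refl.
    + tauto.
    + tauto.
    + rewrite <- !app_assoc. apply rst_step. exists (del_last a x), y, p, q. auto.
Qed.

Lemma del_last_teq a u v : teq I u v -> teq I (del_last a u) (del_last a v).
Proof.
  induction 1.
  - apply del_last_step; auto.
  - apply rst_refl.
  - apply rst_sym; auto.
  - eapply rst_trans; eauto.
Qed.
End Words.

Section Traces.
Variables (E : Type) (I : E -> E -> Prop).
Hypothesis I_irrefl : forall a, ~ I a a.
Hypothesis I_sym : forall a b, I a b -> I b a.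

Notation M := (trace_monoid I).
Notation occ w a := (count_occ classic_eq_dec w a).

Definition letter (a : E) : M := cls I [a].
Definition mcount (a : E) (m : M) : nat := occ (rep m) a.
Definition mlength (m : M) : nat := length (rep m).

Lemma mcount_cls a w : mcount a (cls I w) = occ w a.
Proof. symmetry. apply (teq_occ E I), rep_cls. Qed.

Lemma mlength_cls w : mlength (cls I w) = length w.
Proof. symmetry. apply (teq_length E I), rep_cls. Qed.

Lemma mcount_mul a (x y : M) : mcount a (mmul x y) = mcount a x + mcount a y.
Proof.
  revert x y. refine (tm_ind _ _); intro u. refine (tm_ind _ _); intro v.
  rewrite mmul_cls, !mcount_cls, count_occ_app. reflexivity.
Qed.

Lemma mcount_one a : mcount a (mone I) = 0.
Proof. apply mcount_cls. Qed.

Lemma mcount_letter_self a : mcount a (letter a) = 1.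
Proof. unfold letter. rewrite mcount_cls. simpl. destruct (classic_eq_dec a a); congruence. Qed.

Lemma mlength_mul (x y : M) : mlength (mmul x y) = mlength x + mlength y.
Proof.
  revert x y. refine (tm_ind _ _); intro u. refine (tm_ind _ _); intro v.
  rewrite mmul_cls, !mlength_cls, length_app. reflexivity.
Qed.

Lemma mmul_eq_one (x y : M) : mmul x y = mone I -> x = mone I /\ y = mone I.
Proof.
  assert (H0 : forall m, mlength m = 0 -> m = mone I).
  { refine (tm_ind _ _). intros [|a w] H; [reflexivity|].
    rewrite mlength_cls in H. discriminate. }
  intro H. assert (Hl : mlength (mmul x y) = 0) by (rewrite H; apply mlength_cls).
  rewrite mlength_mul in Hl. split; apply H0; lia.
Qed.

Lemma trace_ind (P : M -> Prop) :
  P (mone I) -> (forall x a, P x -> P (mmul x (letter a))) -> forall m, P m.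
Proof.
  intros H0 HS. refine (tm_ind _ _). intro w. induction w using rev_ind; [exact H0|].
  rewrite <- mmul_cls. apply HS. auto.
Qed.

Lemma mmul_letter_inj_l (x y : M) a : mmul x (letter a) = mmul y (letter a) -> x = y.
Proof.
  revert x y. refine (tm_ind _ _); intro u. refine (tm_ind _ _); intro v. unfold letter.
  rewrite !mmul_cls. intro H. apply (teq_of_cls_eq E I) in H.
  apply (del_last_teq E I I_irrefl a) in H. rewrite !del_last_snoc in H.
  apply cls_eq; auto.
Qed.

Lemma mmul_cancel_r (x y z : M) : mmul x z = mmul y z -> x = y.
Proof.
  revert x y. induction z using trace_ind; intros x y H.
  - rewrite !mmul_1r in H; auto.
  - rewrite !mmul_assoc in H. apply mmul_letter_inj_l in H. auto.
Qed.

Definition mrev (m : M) : M := cls I (rev (rep m)).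

Lemma mrev_cls w : mrev (cls I w) = cls I (rev w).
Proof. apply cls_eq, (teq_rev E I I_sym), rst_sym, rep_cls. Qed.

Lemma mrev_mul (x y : M) : mrev (mmul x y) = mmul (mrev y) (mrev x).
Proof.
  revert x y. refine (tm_ind _ _); intro u. refine (tm_ind _ _); intro v.
  rewrite mmul_cls, !mrev_cls, mmul_cls, rev_app_distr. reflexivity.
Qed.

Lemma mrev_involutive (x : M) : mrev (mrev x) = x.
Proof. revert x; refine (tm_ind _ _); intro u. rewrite !mrev_cls, rev_involutive. reflexivity. Qed.

Lemma mmul_cancel_l (x y z : M) : mmul z x = mmul z y -> x = y.
Proof.
  intro H. apply (f_equal mrev) in H. rewrite !mrev_mul in H. apply mmul_cancel_r in H.
  rewrite <- (mrev_involutive x), <- (mrev_involutive y), H. reflexivity.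
Qed.

(* Levi's lemma for the last letters. *)
Lemma mmul_letter_eq (u v : M) a b : mmul u (letter a) = mmul v (letter b) -> a <> b ->
  I a b /\ exists w, u = mmul w (letter b) /\ v = mmul w (letter a).
Proof.
  revert u v. refine (tm_ind _ _); intro u'. refine (tm_ind _ _); intro v'. unfold letter.
  rewrite !mmul_cls. intros H Hab. apply (teq_of_cls_eq E I) in H.
  pose proof (del_last_teq E I I_irrefl a _ _ H) as Ha.
  rewrite del_last_snoc, del_last_snoc_neq in Ha by auto.
  pose proof (del_last_teq E I I_irrefl b _ _ H) as Hb.
  rewrite del_last_snoc, del_last_snoc_neq in Hb by auto.
  set (w1 := del_last E a v') in *. set (w2 := del_last E b u') in *.
  (* now u' ~ w1 b and v' ~ w2 a, hence w1 b a ~ w2 a b *)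
  assert (E1 : teq I (w1 ++ [b; a]) (w2 ++ [a; b])).
  { apply rst_trans with (u' ++ [a]).
    { change [b; a] with ([b] ++ [a]). rewrite app_assoc. apply teq_app_r, rst_sym, Ha. }
    apply rst_trans with (v' ++ [b]); [exact H|].
    change [a; b] with ([a] ++ [b]). rewrite app_assoc. apply teq_app_r, rst_sym, Hb. }
  assert (E2 : cls I w1 = cls I w2).
  { apply (del_last_teq E I I_irrefl b) in E1.
    change [b; a] with ([b] ++ [a]) in E1. change [a; b] with ([a] ++ [b]) in E1.
    rewrite !app_assoc, del_last_snoc_neq, !del_last_snoc in E1 by auto.
    apply (mmul_letter_inj_l _ _ a). unfold letter. rewrite !mmul_cls. apply cls_eq, E1. }
  split.
  - apply (teq_swap_indep E I); auto. apply (teq_of_cls_eq E I).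
    apply (mmul_cancel_l _ _ (cls I w1)).
    rewrite !mmul_cls, (cls_eq E1), <- mmul_cls, <- E2, mmul_cls. reflexivity.
  - exists (cls I w1). rewrite !mmul_cls. split.
    + apply cls_eq. exact Ha.
    + symmetry. rewrite <- mmul_cls, E2, mmul_cls. apply cls_eq, Hb.
Qed.

Lemma letter_comm a b : I a b -> mmul (letter a) (letter b) = mmul (letter b) (letter a).
Proof.
  intro H. unfold letter. rewrite !mmul_cls. apply cls_eq, rst_step. exists [], [], a, b. auto.
Qed.

Definition indep (a : E) (m : M) : Prop := forall b, mcount b m > 0 -> I a b.

Lemma indep_mcount a m : indep a m -> mcount a m = 0.
Proof. intro H. destruct (mcount a m) eqn:E0; auto. exfalso. apply (I_irrefl a), H. lia. Qed.

Lemma indep_mul a (x y : M) : indep a (mmul x y) <-> indep a x /\ indep a y.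
Proof.
  unfold indep. setoid_rewrite mcount_mul. split.
  - intro H; split; intros b Hb; apply H; lia.
  - intros [H1 H2] b Hb. destruct (mcount b x) eqn:?; [apply H2|apply H1]; lia.
Qed.

Lemma indep_one a : indep a (mone I).
Proof. intros b Hb. rewrite mcount_one in Hb. lia. Qed.

Lemma indep_letter a b : I a b -> indep a (letter b).
Proof.
  intros H c Hc. unfold letter in Hc. rewrite mcount_cls in Hc. simpl in Hc.
  destruct (classic_eq_dec b c); subst; auto; simpl in Hc; lia.
Qed.

Lemma indep_comm a m : indep a m -> mmul (letter a) m = mmul m (letter a).
Proof.
  revert m. refine (tm_ind _ _); intros w H. unfold letter. rewrite !mmul_cls. apply cls_eq.
  apply (teq_commute E I I_sym). intros b Hb. apply H. rewrite mcount_cls.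
  apply count_occ_In; auto.
Qed.

Lemma mmul_eq_mmul_letter (u v w : M) a : mmul u v = mmul w (letter a) ->
  (exists v', v = mmul v' (letter a)) \/ (exists u', u = mmul u' (letter a) /\ indep a v).
Proof.
  revert w. induction v as [|v b IH] using trace_ind; intros w H.
  - right. rewrite mmul_1r in H. exists w. split; auto. apply indep_one.
  - rewrite mmul_assoc in H. destruct (classic_eq_dec b a) as [->|Hne]; [left; eauto|].
    destruct (mmul_letter_eq _ _ _ _ H Hne) as [Hba [w' [E1 E2]]].
    destruct (IH w' E1) as [[v' ->]|[u' [-> Hc]]].
    + left. exists (mmul v' (letter b)). rewrite <- !mmul_assoc, letter_comm; auto.
    + right. exists u'. split; auto. apply indep_mul. split; auto. apply indep_letter; auto.
Qed.
End Traces.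

(** * Cliques *)

Section Cliques.
Variables (E : Type) (I : E -> E -> Prop) (lt : E -> E -> Prop).
Hypothesis I_irrefl : forall a, ~ I a a.
Hypothesis I_sym : forall a b, I a b -> I b a.
Hypothesis lt_irrefl : forall a, ~ lt a a.
Hypothesis lt_trans : forall a b c, lt a b -> lt b c -> lt a c.
Hypothesis lt_total : forall a b, lt a b \/ a = b \/ lt b a.

Notation M := (trace_monoid I).

Definition clique (c : M) : Prop :=
  exists l, NoDup l /\ commuting_set I (fun x => In x l) /\ c = cls I l.

Lemma clique_one : clique (mone I).
Proof. exists []. split; [constructor|]. split; [intros x y []|reflexivity]. Qed.

Lemma clique_mcount_le1 c a : clique c -> mcount E I a c <= 1.
Proof. intros (l & Hn & _ & ->). rewrite mcount_cls. apply NoDup_count_occ, Hn. Qed.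

Lemma clique_indep_pair c a b :
  clique c -> mcount E I a c > 0 -> mcount E I b c > 0 -> a <> b -> I a b.
Proof.
  intros (l & _ & Hp & ->). rewrite !mcount_cls. intros Ha Hb.
  apply Hp; apply (count_occ_In classic_eq_dec); auto.
Qed.

Lemma clique_split c a :
  clique c -> mcount E I a c > 0 -> exists c', c = mmul c' (letter E I a) /\ clique c'.
Proof.
  intros (l & Hn & Hp & ->) Ha. rewrite mcount_cls in Ha.
  apply (count_occ_In classic_eq_dec), in_split in Ha. destruct Ha as (l1 & l2 & ->).
  exists (cls I (l1 ++ l2)). split.
  - unfold letter. rewrite mmul_cls. apply cls_eq. rewrite <- app_assoc. apply teq_app_l.
    apply (teq_commute E I I_sym). intros b Hb. apply Hp; try (apply in_or_app; simpl; auto).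
    intros <-. apply NoDup_remove_2 in Hn. apply Hn, in_or_app; auto.
  - exists (l1 ++ l2). split; [eapply NoDup_remove_1; eauto|]. split; [|reflexivity].
    intros x y Hx Hy Hxy. apply Hp; auto; rewrite in_app_iff in *; simpl; tauto.
Qed.

Lemma clique_cons c a : clique c -> indep E I a c -> clique (mmul (letter E I a) c).
Proof.
  intros (l & Hn & Hp & ->) Hc.
  assert (Hl : forall b, In b l -> I a b).
  { intros b Hb. apply Hc. rewrite mcount_cls. apply count_occ_In; auto. }
  exists (a :: l). unfold letter. rewrite mmul_cls. split; [|split; auto].
  - constructor; auto. intro Ha. apply (I_irrefl a), Hl, Ha.
  - intros x y [->|Hx] [->|Hy] Hxy; auto; congruence.
Qed.

Lemma clique_indep_after u v a : clique (mmul (mmul u (letter E I a)) v) -> indep E I a v.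
Proof.
  intros Q b Hb. pose proof (clique_mcount_le1 _ a Q) as Hle.
  rewrite !mcount_mul, mcount_letter_self in Hle.
  destruct (classic_eq_dec a b) as [<-|Hab]; [lia|].
  apply (clique_indep_pair _ a b Q); auto; rewrite !mcount_mul; [rewrite mcount_letter_self|]; lia.
Qed.

Lemma clique_of_union_T c : union_T lt c -> clique c.
Proof.
  intros (Ev & [Hc _] & l & Hl & Hs & ->). exists l. split; [|split; auto].
  - apply Sorted_StronglySorted in Hs; [|exact lt_trans]. clear -Hs lt_irrefl.
    induction Hs as [|a l _ IH Hal]; constructor; auto.
    intro Ha. rewrite Forall_forall in Hal. apply (lt_irrefl a); auto.
  - intros x y Hx Hy Hxy. apply Hc; auto.
Qed.

Fixpoint insert (a : E) (l : list E) : list E :=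
  match l with
  | [] => [a]
  | b :: l' => if excluded_middle_informative (lt a b) then a :: b :: l' else b :: insert a l'
  end.

Fixpoint insertion_sort (l : list E) : list E :=
  match l with [] => [] | a :: l' => insert a (insertion_sort l') end.

Lemma in_insert a l x : In x (insert a l) <-> x = a \/ In x l.
Proof.
  induction l; simpl; [firstorder congruence|].
  destruct (excluded_middle_informative (lt a a0)); simpl; rewrite ?IHl; firstorder congruence.
Qed.

Lemma in_insertion_sort l x : In x (insertion_sort l) <-> In x l.
Proof. induction l; simpl; [tauto|]. rewrite in_insert, IHl. firstorder congruence. Qed.

Lemma insert_sorted a l : StronglySorted lt l -> ~ In a l -> StronglySorted lt (insert a l).
Proof.
  induction 1 as [|b l Hl IH Hb]; intro Ha; simpl; [repeat constructor|].
  destruct (excluded_middle_informative (lt a b)) as [Hab|Hab].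
  - constructor; [constructor; auto|]. constructor; auto.
    rewrite Forall_forall in *. eauto.
  - constructor; [apply IH; simpl in Ha; tauto|].
    rewrite Forall_forall in *. intros x Hx. apply in_insert in Hx. destruct Hx as [->|Hx]; auto.
    destruct (lt_total a b) as [h|[->|h]]; try contradiction; auto. simpl in Ha; tauto.
Qed.

Lemma insertion_sort_sorted l : NoDup l -> StronglySorted lt (insertion_sort l).
Proof.
  induction 1; simpl; [constructor|]. apply insert_sorted; auto. rewrite in_insertion_sort; auto.
Qed.

Lemma insert_teq a l : (forall b, In b l -> I a b) -> teq I (insert a l) (a :: l).
Proof.
  induction l as [|b l IH]; simpl; intros H; [apply rst_refl|].
  destruct (excluded_middle_informative (lt a b)); [apply rst_refl|].
  eapply rst_trans.
  - apply (teq_app_l (I := I) (u := insert a l) (v := a :: l) [b]). apply IH; auto.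
  - apply rst_step. exists [], l, b, a. split; [apply I_sym, H; simpl; auto|auto].
Qed.

Lemma insertion_sort_teq l :
  NoDup l -> commuting_set I (fun x => In x l) -> teq I (insertion_sort l) l.
Proof.
  induction l as [|a l IH]; simpl; intros Hn Hp; [apply rst_refl|].
  inversion Hn; subst. eapply rst_trans.
  - apply insert_teq. intros b Hb. rewrite in_insertion_sort in Hb.
    apply Hp; simpl; auto. intros <-; auto.
  - apply (teq_app_l (I := I) (u := insertion_sort l) (v := l) [a]).
    apply IH; auto. intros x y Hx Hy; apply Hp; simpl; auto.
Qed.

Lemma maximal_commuting_superset (l : list E) :
  commuting_set I (fun x => In x l) ->
  exists A, maximal_commuting_set I A /\ forall x, In x l -> A x.
Proof.
  intros Hl.
  (* Zorn needs the empty union to be admissible, hence the disjunction. *)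
  set (P := fun A : E -> Prop =>
              commuting_set I A /\ ((forall x, ~ A x) \/ forall x, In x l -> A x)).
  destruct (@classical_sets.Zorn_bigcup E P) as [A [[HA1 HA2] HAmax]].
  - intros F HF Htot. split.
    + intros a b [X FX Xa] [Y FY Yb] Hab.
      destruct (Htot X Y FX FY) as [h|h]; unfold classical_sets.subset in h;
        [apply (proj1 (HF Y FY)) | apply (proj1 (HF X FX))]; auto.
    + destruct (classic (exists X, F X /\ forall x, In x l -> X x)) as [[X [FX HX]]|Hno].
      * right. intros x Hx. exists X; auto.
      * left. intros x [X FX Xx]. destruct (proj2 (HF X FX)) as [h|h]; [apply (h x); auto|].
        apply Hno; eauto.
  - assert (HlA : forall x, In x l -> A x).
    { destruct HA2 as [h|h]; auto. intros x Hx. exfalso. apply (HAmax (fun y => In y l)).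
      - split; [intros t Ht; exfalso; apply (h t); auto|].
        intro Hs. apply (h x). apply Hs; auto.
      - split; auto. }
    exists A. split; auto. split; auto.
    intros B HB HAB x Bx. apply NNPP. intro nAx. apply (HAmax B).
    + split; [intros t Ht; apply HAB; auto|]. intro h. apply nAx, h, Bx.
    + split; [exact HB|right; intros y Hy; apply HAB; auto].
Qed.

Lemma union_T_of_clique c : clique c -> union_T lt c.
Proof.
  intros (l & Hn & Hp & ->). destruct (maximal_commuting_superset l Hp) as [A [HA Hl]].
  exists A. split; auto. exists (insertion_sort l). split; [|split].
  - intros x Hx; apply Hl, in_insertion_sort, Hx.
  - apply StronglySorted_Sorted, insertion_sort_sorted, Hn.
  - apply cls_eq, rst_sym, insertion_sort_teq; auto.
Qed.
End Cliques.

(** * The comma categories *)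

Section CommaCategory.
Variables (E : Type) (I : E -> E -> Prop) (lt : E -> E -> Prop).
Hypothesis I_irrefl : forall a, ~ I a a.
Hypothesis I_sym : forall a b, I a b -> I b a.
Hypothesis lt_irrefl : forall a, ~ lt a a.
Hypothesis lt_trans : forall a b c, lt a b -> lt b c -> lt a c.
Hypothesis lt_total : forall a b, lt a b \/ a = b \/ lt b a.

Notation M := (trace_monoid I).
Local Infix "⋅" := mmul (at level 40, left associativity).

(* An object of the comma category over [d] is a factorisation [d = g c f]
   with [c] in some [T_v]; an arrow [(c1,f1,g1) -> (c2,f2,g2)] is a pair [(x, y)]
   with [c2 = y c1 x], [f1 = x f2] and [g1 = g2 y]. *)
Definition Cm (d : M) : cat := comma (incl (FM I) (union_T lt)) d.

Definition cfac {d} (o : ob (Cm d)) : M := proj1_sig (projT1 o).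
Definition ffac {d} (o : ob (Cm d)) : M := fst (proj1_sig (projT2 o)).
Definition gfac {d} (o : ob (Cm d)) : M := snd (proj1_sig (projT2 o)).

Lemma factorisation d (o : ob (Cm d)) : gfac o ⋅ cfac o ⋅ ffac o = d.
Proof. destruct o as [[c Hc] [[f g] H]]. exact H. Qed.

Lemma cfac_union_T d (o : ob (Cm d)) : union_T lt (cfac o).
Proof. destruct o as [[c Hc] [[f g] H]]. exact Hc. Qed.

Lemma cfac_clique d (o : ob (Cm d)) : clique E I (cfac o).
Proof. apply (clique_of_union_T E I lt lt_irrefl lt_trans), cfac_union_T. Qed.

Lemma Cm_ob_ext d (o1 o2 : ob (Cm d)) :
  cfac o1 = cfac o2 -> ffac o1 = ffac o2 -> gfac o1 = gfac o2 -> o1 = o2.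
Proof.
  destruct o1 as [[c1 Hc1] [[f1 g1] H1]], o2 as [[c2 Hc2] [[f2 g2] H2]].
  unfold cfac, ffac, gfac; simpl. intros -> -> ->.
  rewrite (proof_irrelevance _ Hc1 Hc2), (proof_irrelevance _ H1 H2). reflexivity.
Qed.

Lemma arr_Cm_iff d (o1 o2 : ob (Cm d)) :
  arr (Cm d) o1 o2 <->
  exists x y, y ⋅ cfac o1 ⋅ x = cfac o2 /\ x ⋅ ffac o2 = ffac o1 /\ gfac o2 ⋅ y = gfac o1.
Proof.
  destruct o1 as [[c1 Hc1] [[f1 g1] H1]], o2 as [[c2 Hc2] [[f2 g2] H2]].
  unfold cfac, ffac, gfac; simpl. split.
  - intros [[[[x y] Hxy] Hu]]. simpl in *. exists x, y. split; auto.
    apply (f_equal (@proj1_sig _ _)) in Hu. simpl in Hu. injection Hu; auto.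
  - intros (x & y & E1 & E2 & E3). constructor.
    refine (exist _ (exist _ (x, y) E1) _). apply subset_eq_compat. simpl.
    rewrite E2, E3. reflexivity.
Qed.

Lemma Cm_thin d : thin (Cm d).
Proof.
  intros [[c1 Hc1] [[f1 g1] H1]] [[c2 Hc2] [[f2 g2] H2]] [[[x y] Hxy] Hu] [[[x' y'] Hxy'] Hu'].
  pose proof (f_equal (@proj1_sig _ _) Hu) as K. pose proof (f_equal (@proj1_sig _ _) Hu') as K'.
  simpl in K, K'. injection K as E1 E2. injection K' as E1' E2'.
  assert (x = x') by (apply (mmul_cancel_r E I I_irrefl _ _ f2); congruence).
  assert (y = y') by (apply (mmul_cancel_l E I I_irrefl I_sym _ _ g2); congruence). subst x' y'.
  assert (Hxy = Hxy') by apply proof_irrelevance. subst Hxy'.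
  f_equal. apply proof_irrelevance.
Qed.

Lemma union_T_one : union_T lt (mone I).
Proof. apply (union_T_of_clique E I lt I_sym lt_irrefl lt_trans lt_total), clique_one. Qed.

Definition trivial_ob (d : M) : ob (Cm d).
Proof.
  refine (existT _ (exist _ (mone I) union_T_one) (exist _ (d, mone I) _)).
  simpl. rewrite !mmul_1l. reflexivity.
Defined.

(* The object with factors [(c, f, g)]; junk when these do not form one. *)
Definition mk_ob (d c f g : M) : ob (Cm d) :=
  match excluded_middle_informative (union_T lt c /\ g ⋅ c ⋅ f = d) with
  | left H => existT (fun x : ob (full_sub (FM I) (union_T lt)) => hom (FM I) (proj1_sig x) d)
                (exist _ c (proj1 H)) (exist _ (f, g) (proj2 H))
  | right _ => trivial_ob d
  end.

Definition has_factors {d} (o : ob (Cm d)) c f g : Prop := cfac o = c /\ ffac o = f /\ gfac o = g.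

Lemma mk_ob_factors d c f g :
  union_T lt c -> g ⋅ c ⋅ f = d -> has_factors (mk_ob d c f g) c f g.
Proof.
  intros H1 H2. unfold mk_ob. destruct (excluded_middle_informative _) as [h|h].
  - repeat split.
  - exfalso; auto.
Qed.

Lemma has_factors_self d (o : ob (Cm d)) : has_factors o (cfac o) (ffac o) (gfac o).
Proof. repeat split. Qed.

Lemma arr_of_factors d (o1 o2 : ob (Cm d)) c1 f1 g1 c2 f2 g2 :
  has_factors o1 c1 f1 g1 -> has_factors o2 c2 f2 g2 ->
  (exists x y, y ⋅ c1 ⋅ x = c2 /\ x ⋅ f2 = f1 /\ g2 ⋅ y = g1) -> arr (Cm d) o1 o2.
Proof. intros (<- & <- & <-) (<- & <- & <-) H. apply arr_Cm_iff, H. Qed.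

Lemma acyclic_Cm_one : acyclic (Cm (mone I)).
Proof.
  apply (acyclic_singleton _ (Cm_thin _) (trivial_ob _)). intros o1 o2.
  pose proof (factorisation _ o1) as H1. pose proof (factorisation _ o2) as H2.
  apply mmul_eq_one in H1 as [H1 Hf1]. apply mmul_eq_one in H1 as [Hg1 Hc1].
  apply mmul_eq_one in H2 as [H2 Hf2]. apply mmul_eq_one in H2 as [Hg2 Hc2].
  apply Cm_ob_ext; congruence.
Qed.
End CommaCategory.

Arguments cfac {E I lt d} o.
Arguments ffac {E I lt d} o.
Arguments gfac {E I lt d} o.
Arguments factorisation {E I lt d} o.
Arguments cfac_union_T {E I lt d} o.
Arguments has_factors {E I lt d} o c f g.
Arguments has_factors_self {E I lt d} o.
Arguments arr_Cm_iff {E I lt d} o1 o2.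
Arguments arr_of_factors {E I lt d} o1 o2 {c1 f1 g1 c2 f2 g2}.

Section LastLetter.
Variables (E : Type) (I : E -> E -> Prop) (lt : E -> E -> Prop).
Hypothesis I_irrefl : forall a, ~ I a a.
Hypothesis I_sym : forall a b, I a b -> I b a.
Hypothesis lt_irrefl : forall a, ~ lt a a.
Hypothesis lt_trans : forall a b c, lt a b -> lt b c -> lt a c.
Hypothesis lt_total : forall a b, lt a b \/ a = b \/ lt b a.

Notation M := (trace_monoid I).
Local Infix "⋅" := mmul (at level 40, left associativity).

Variables (d : M) (a : E).
Notation A := (letter E I a).
Notation C := (Cm E I lt (d ⋅ A)).
Notation D := (Cm E I lt d).
Notation indep := (indep E I a).
Notation mk_ob := (mk_ob E I lt I_sym lt_irrefl lt_trans lt_total).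

Lemma cancel_A (x y : M) : x ⋅ A = y ⋅ A -> x = y.
Proof. apply mmul_letter_inj_l; auto. Qed.

Lemma indep_A_comm (m : M) : indep m -> A ⋅ m = m ⋅ A.
Proof. apply indep_comm; auto. Qed.

Lemma mmul_A_swap (x m : M) : indep m -> x ⋅ m ⋅ A = x ⋅ A ⋅ m.
Proof. intro H. rewrite <- !mmul_assoc, indep_A_comm; auto. Qed.

Lemma indep_mul3 (y c x : M) : indep (y ⋅ c ⋅ x) <-> indep y /\ indep c /\ indep x.
Proof. rewrite !indep_mul. tauto. Qed.

Lemma indep_no_A (m m' : M) : indep m -> m <> m' ⋅ A.
Proof.
  intros H ->. apply (indep_mcount E I I_irrefl) in H.
  rewrite mcount_mul, mcount_letter_self in H. lia.
Qed.

Lemma mmul_eq_mmul_A (u v w : M) : u ⋅ v = w ⋅ A ->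
  (exists v', v = v' ⋅ A) \/ (exists u', u = u' ⋅ A /\ indep v).
Proof. apply mmul_eq_mmul_letter; auto. Qed.

Definition quot_A (x : M) : M :=
  match excluded_middle_informative (exists x', x = x' ⋅ A) with
  | left H => proj1_sig (constructive_indefinite_description _ H)
  | right _ => x
  end.

Lemma quot_A_spec x x' : x = x' ⋅ A -> quot_A x = x'.
Proof.
  intro H. unfold quot_A. destruct (excluded_middle_informative _) as [h|h]; [|exfalso; eauto].
  destruct (constructive_indefinite_description _ h) as [z Hz]. simpl. apply cancel_A. congruence.
Qed.

(* The last letter [a] of [g c f = d a] is the last letter of [f] (case F),
   or else of [c] (case C), or else of [g] (case G). *)
Definition ends_f (o : ob C) : Prop := exists f', ffac o = f' ⋅ A.
Definition ends_c (o : ob C) : Prop := exists c', cfac o = c' ⋅ A.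

Lemma not_ends_f o : ~ ends_f o -> (exists u', gfac o ⋅ cfac o = u' ⋅ A) /\ indep (ffac o).
Proof.
  intro h. destruct (mmul_eq_mmul_A _ _ d (factorisation o)) as [H|[u' [H1 H2]]];
    [contradiction|eauto].
Qed.

Lemma ends_g o : ~ ends_f o -> ~ ends_c o ->
  (exists g', gfac o = g' ⋅ A) /\ indep (cfac o) /\ indep (ffac o).
Proof.
  intros h1 h2. destruct (not_ends_f o h1) as [[u' Hu] Hf].
  destruct (mmul_eq_mmul_A _ _ _ Hu) as [H|[g' [H1 H2]]]; [contradiction|eauto].
Qed.

Lemma ends_f_of_arr o1 o2 : arr C o1 o2 -> ends_f o2 -> ends_f o1.
Proof.
  intros H [f' Hf]. apply arr_Cm_iff in H as (x & y & _ & Ef & _).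
  exists (x ⋅ f'). rewrite <- Ef, Hf, mmul_assoc. reflexivity.
Qed.

Lemma ends_g_of_arr o1 o2 : arr C o1 o2 -> ~ ends_f o2 -> ~ ends_c o2 ->
  ~ ends_f o1 /\ ~ ends_c o1.
Proof.
  intros H nF2 nC2. apply arr_Cm_iff in H as (x & y & Ec & Ef & _).
  destruct (ends_g o2 nF2 nC2) as [_ [Hc2 _]]. rewrite <- Ec in Hc2.
  apply indep_mul3 in Hc2 as (_ & Hc1 & Hx). split.
  - intros [f1' Hf1]. rewrite <- Ef in Hf1.
    destruct (mmul_eq_mmul_A _ _ _ Hf1) as [[v' Hv]|[x' [Hx' _]]].
    + apply nF2. exists v'; auto.
    + exact (indep_no_A _ _ Hx Hx').
  - intros [c1' Hc]. exact (indep_no_A _ _ Hc1 Hc).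
Qed.

Definition strip (o : ob C) : ob D :=
  if excluded_middle_informative (ends_f o) then mk_ob d (cfac o) (quot_A (ffac o)) (gfac o)
  else if excluded_middle_informative (ends_c o) then mk_ob d (quot_A (cfac o)) (ffac o) (gfac o)
  else mk_ob d (cfac o) (ffac o) (quot_A (gfac o)).

Definition push (o : ob C) : ob C :=
  if excluded_middle_informative (ends_f o \/ ends_c o) then o
  else mk_ob (d ⋅ A) (A ⋅ cfac o) (ffac o) (quot_A (gfac o)).

Definition extend (o : ob D) : ob C := mk_ob (d ⋅ A) (cfac o) (ffac o ⋅ A) (gfac o).

Notation union_T_of_clique := (union_T_of_clique E I lt I_sym lt_irrefl lt_trans lt_total).
Notation cfac_clique := (cfac_clique E I lt lt_irrefl lt_trans).

Lemma strip_F o f' : ffac o = f' ⋅ A -> has_factors (strip o) (cfac o) f' (gfac o).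
Proof.
  intro H. unfold strip. destruct (excluded_middle_informative (ends_f o)) as [_|h];
    [|exfalso; apply h; exists f'; exact H].
  rewrite (quot_A_spec _ _ H). apply mk_ob_factors; [apply cfac_union_T|].
  apply cancel_A. rewrite <- mmul_assoc, <- H. apply factorisation.
Qed.

Lemma strip_C o c' : ~ ends_f o -> cfac o = c' ⋅ A -> has_factors (strip o) c' (ffac o) (gfac o).
Proof.
  intros nF H. unfold strip. destruct (excluded_middle_informative (ends_f o)); [contradiction|].
  destruct (excluded_middle_informative (ends_c o)) as [_|h];
    [|exfalso; apply h; exists c'; exact H].
  rewrite (quot_A_spec _ _ H). destruct (not_ends_f o nF) as [_ Hf]. apply mk_ob_factors.
  - pose proof (cfac_clique _ o) as Q. rewrite H in Q.
    destruct (clique_split E I I_sym _ a Q) as [c'' [E1 E2]];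
      [rewrite mcount_mul, mcount_letter_self; lia|].
    apply cancel_A in E1. subst. apply union_T_of_clique; auto.
  - apply cancel_A. rewrite <- (factorisation o), H, mmul_A_swap by auto.
    rewrite !mmul_assoc. reflexivity.
Qed.

Lemma strip_G o g' : ~ ends_f o -> ~ ends_c o -> gfac o = g' ⋅ A ->
  has_factors (strip o) (cfac o) (ffac o) g'.
Proof.
  intros nF nC H. unfold strip.
  destruct (excluded_middle_informative (ends_f o)); [contradiction|].
  destruct (excluded_middle_informative (ends_c o)); [contradiction|].
  rewrite (quot_A_spec _ _ H). destruct (ends_g o nF nC) as [_ [Hc Hf]].
  apply mk_ob_factors; [apply cfac_union_T|]. apply cancel_A.
  rewrite <- (factorisation o), H, !mmul_A_swap by auto. reflexivity.
Qed.

Lemma push_FC o : ends_f o \/ ends_c o -> push o = o.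
Proof.
  intro h. unfold push. destruct (excluded_middle_informative _); [reflexivity|contradiction].
Qed.

Lemma push_G o g' : ~ ends_f o -> ~ ends_c o -> gfac o = g' ⋅ A ->
  has_factors (push o) (A ⋅ cfac o) (ffac o) g'.
Proof.
  intros nF nC H. unfold push. destruct (excluded_middle_informative _) as [h|h]; [tauto|].
  rewrite (quot_A_spec _ _ H). destruct (ends_g o nF nC) as [_ [Hc Hf]].
  apply mk_ob_factors.
  - apply union_T_of_clique, clique_cons; auto. apply cfac_clique.
  - rewrite <- (factorisation o), H, !mmul_assoc. reflexivity.
Qed.

Lemma extend_factors o : has_factors (extend o) (cfac o) (ffac o ⋅ A) (gfac o).
Proof.
  apply mk_ob_factors; [apply cfac_union_T|]. rewrite mmul_assoc, factorisation. reflexivity.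
Qed.

Section Monotone.
Variables (o1 o2 : ob C) (x y : M).
Hypotheses (Ec : y ⋅ cfac o1 ⋅ x = cfac o2) (Ef : x ⋅ ffac o2 = ffac o1)
  (Eg : gfac o2 ⋅ y = gfac o1).

Lemma arr_o1_o2 : arr C o1 o2.
Proof. apply arr_Cm_iff; eauto. Qed.

Lemma y_ends_A_of_G_to_C g1' : ~ ends_f o1 -> ~ ends_c o1 -> gfac o1 = g1' ⋅ A ->
  ends_c o2 -> exists y', y = y' ⋅ A /\ gfac o2 ⋅ y' = g1'.
Proof.
  intros nF1 nC1 Hg1 [c2' Hc2]. destruct (ends_g o1 nF1 nC1) as [_ [Hc1 Hf1]].
  assert (Hx : indep x) by (rewrite <- Ef in Hf1; apply indep_mul in Hf1; tauto).
  destruct (mmul_eq_mmul_A (gfac o2) y g1') as [[y' Hy]|[g2' [_ Hy]]]; [congruence| |].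
  - exists y'. split; auto. apply cancel_A. rewrite <- Hg1, <- Eg, Hy, mmul_assoc. reflexivity.
  - (* then [c2 = y c1 x] would not contain [a] *)
    exfalso. apply (indep_no_A (cfac o2) c2'); auto. rewrite <- Ec. apply indep_mul3; auto.
Qed.

Lemma strip_arr_F : ends_f o2 -> arr D (strip o1) (strip o2).
Proof.
  intros [f2' Hf2].
  assert (Hf1 : ffac o1 = x ⋅ f2' ⋅ A) by (rewrite <- Ef, Hf2, mmul_assoc; reflexivity).
  apply (arr_of_factors _ _ (strip_F o1 _ Hf1) (strip_F o2 f2' Hf2)). exists x, y. auto.
Qed.

Lemma strip_arr_C : ~ ends_f o2 -> ends_c o2 -> arr D (strip o1) (strip o2).
Proof.
  intros nF2 C2. pose proof C2 as [c2' Hc2]. destruct (not_ends_f o2 nF2) as [_ Hf2].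
  destruct (classic (ends_f o1)) as [[f1' Hf1]|nF1].
  { destruct (mmul_eq_mmul_A x (ffac o2) f1') as [[v' Hv]|[x' [Hx _]]]; [congruence| |].
    { exfalso; apply nF2; exists v'; auto. }
    apply (arr_of_factors _ _ (strip_F o1 f1' Hf1) (strip_C o2 c2' nF2 Hc2)).
    exists x', y. repeat split; auto; apply cancel_A.
    - rewrite <- Hc2, <- Ec, Hx, !mmul_assoc. reflexivity.
    - rewrite <- Hf1, <- Ef, Hx, mmul_A_swap by auto. reflexivity. }
  destruct (classic (ends_c o1)) as [[c1' Hc1]|nC1].
  { assert (Hx : indep x).
    { apply (clique_indep_after E I (y ⋅ c1')).
      rewrite <- (mmul_assoc y c1'), <- Hc1, Ec. apply cfac_clique. }
    apply (arr_of_factors _ _ (strip_C o1 c1' nF1 Hc1) (strip_C o2 c2' nF2 Hc2)).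
    exists x, y. repeat split; auto. apply cancel_A.
    rewrite <- Hc2, <- Ec, Hc1, mmul_A_swap, !mmul_assoc by auto. reflexivity. }
  destruct (ends_g o1 nF1 nC1) as [[g1' Hg1] [Hc1 Hf1]].
  assert (Hx : indep x) by (rewrite <- Ef in Hf1; apply indep_mul in Hf1; tauto).
  destruct (y_ends_A_of_G_to_C g1' nF1 nC1 Hg1 C2) as (y' & Hy & Hg).
  apply (arr_of_factors _ _ (strip_G o1 g1' nF1 nC1 Hg1) (strip_C o2 c2' nF2 Hc2)).
  exists x, y'. repeat split; auto. apply cancel_A.
  rewrite <- Hc2, <- Ec, Hy, !mmul_A_swap by auto. reflexivity.
Qed.

Lemma strip_arr_G : ~ ends_f o2 -> ~ ends_c o2 -> arr D (strip o1) (strip o2).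
Proof.
  intros nF2 nC2. destruct (ends_g_of_arr o1 o2 arr_o1_o2 nF2 nC2) as [nF1 nC1].
  destruct (ends_g o1 nF1 nC1) as [[g1' Hg1] _].
  destruct (ends_g o2 nF2 nC2) as [[g2' Hg2] [Hc2 _]].
  assert (Hy : indep y) by (rewrite <- Ec in Hc2; apply indep_mul3 in Hc2; tauto).
  apply (arr_of_factors _ _ (strip_G o1 g1' nF1 nC1 Hg1) (strip_G o2 g2' nF2 nC2 Hg2)).
  exists x, y. repeat split; auto. apply cancel_A.
  rewrite <- Hg1, <- Eg, Hg2, mmul_A_swap by auto. reflexivity.
Qed.

Lemma push_arr_FC : ends_f o2 \/ ends_c o2 -> arr C (push o1) (push o2).
Proof.
  intro FC2. rewrite (push_FC o2 FC2).
  destruct (classic (ends_f o1 \/ ends_c o1)) as [FC1|nFC1].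
  { rewrite (push_FC o1 FC1). apply arr_o1_o2. }
  assert (nF1 : ~ ends_f o1) by tauto. assert (nC1 : ~ ends_c o1) by tauto.
  assert (C2 : ends_c o2).
  { destruct FC2 as [F2|C2]; auto. exfalso. apply nF1, (ends_f_of_arr o1 o2 arr_o1_o2 F2). }
  destruct (ends_g o1 nF1 nC1) as [[g1' Hg1] _].
  destruct (y_ends_A_of_G_to_C g1' nF1 nC1 Hg1 C2) as (y' & Hy & Hg).
  apply (arr_of_factors _ _ (push_G o1 g1' nF1 nC1 Hg1) (has_factors_self o2)).
  exists x, y'. repeat split; auto. rewrite <- Ec, Hy, !mmul_assoc. reflexivity.
Qed.

Lemma push_arr_G : ~ ends_f o2 -> ~ ends_c o2 -> arr C (push o1) (push o2).
Proof.
  intros nF2 nC2. destruct (ends_g_of_arr o1 o2 arr_o1_o2 nF2 nC2) as [nF1 nC1].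
  destruct (ends_g o1 nF1 nC1) as [[g1' Hg1] _].
  destruct (ends_g o2 nF2 nC2) as [[g2' Hg2] [Hc2 _]].
  assert (Hy : indep y) by (rewrite <- Ec in Hc2; apply indep_mul3 in Hc2; tauto).
  apply (arr_of_factors _ _ (push_G o1 g1' nF1 nC1 Hg1) (push_G o2 g2' nF2 nC2 Hg2)).
  exists x, y. repeat split; auto.
  - rewrite <- Ec, (mmul_assoc y A), <- (indep_A_comm y), !mmul_assoc by auto. reflexivity.
  - apply cancel_A. rewrite <- Hg1, <- Eg, Hg2, mmul_A_swap by auto. reflexivity.
Qed.
End Monotone.

Lemma strip_monotone : monotone strip.
Proof.
  intros o1 o2 H. apply arr_Cm_iff in H as (x & y & Ec & Ef & Eg).
  destruct (classic (ends_f o2)) as [F2|nF2]; [apply (strip_arr_F _ _ x y); auto|].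
  destruct (classic (ends_c o2)) as [C2|nC2]; [apply (strip_arr_C _ _ x y); auto|].
  apply (strip_arr_G _ _ x y); auto.
Qed.

Lemma push_monotone : monotone push.
Proof.
  intros o1 o2 H. apply arr_Cm_iff in H as (x & y & Ec & Ef & Eg).
  destruct (classic (ends_f o2 \/ ends_c o2)) as [FC2|nFC2].
  - apply (push_arr_FC _ _ x y); auto.
  - apply (push_arr_G _ _ x y); tauto.
Qed.

Lemma extend_monotone : monotone extend.
Proof.
  intros o1 o2 H. apply arr_Cm_iff in H as (x & y & Ec & Ef & Eg).
  apply (arr_of_factors _ _ (extend_factors o1) (extend_factors o2)).
  exists x, y. repeat split; auto. rewrite mmul_assoc, Ef. reflexivity.
Qed.

Lemma arr_push o : arr C o (push o).
Proof.
  destruct (classic (ends_f o \/ ends_c o)) as [FC|nFC].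
  - rewrite (push_FC o FC). constructor. apply cid.
  - assert (nF : ~ ends_f o) by tauto. assert (nC : ~ ends_c o) by tauto.
    destruct (ends_g o nF nC) as [[g' Hg] _].
    apply (arr_of_factors _ _ (has_factors_self o) (push_G o g' nF nC Hg)).
    exists (mone I), A. rewrite mmul_1r, mmul_1l. auto.
Qed.

Lemma arr_extend_strip o : arr C (extend (strip o)) (push o).
Proof.
  destruct (classic (ends_f o)) as [[f' Hf]|nF].
  - rewrite push_FC by (left; exists f'; auto).
    destruct (strip_F o f' Hf) as (E1 & E2 & E3).
    apply (arr_of_factors _ _ (extend_factors _) (has_factors_self o)).
    exists (mone I), (mone I). rewrite E1, E2, E3, Hf, !mmul_1l, !mmul_1r. auto.
  - destruct (not_ends_f o nF) as [_ Hf].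
    destruct (classic (ends_c o)) as [[c' Hc]|nC].
    + rewrite push_FC by (right; exists c'; auto).
      destruct (strip_C o c' nF Hc) as (E1 & E2 & E3).
      apply (arr_of_factors _ _ (extend_factors _) (has_factors_self o)).
      exists A, (mone I). rewrite E1, E2, E3, Hc, !mmul_1l, !mmul_1r. auto using indep_A_comm.
    + destruct (ends_g o nF nC) as [[g' Hg] [Hc _]].
      destruct (strip_G o g' nF nC Hg) as (E1 & E2 & E3).
      apply (arr_of_factors _ _ (extend_factors _) (push_G o g' nF nC Hg)).
      exists A, (mone I). rewrite E1, E2, E3, !mmul_1l, !mmul_1r.
      split; [symmetry|split]; auto using indep_A_comm.
Qed.

Theorem Cm_snoc_dominated : htpy_dominated C D.
Proof.
  exists strip, extend, push.
  exact (conj strip_monotone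
           (conj extend_monotone (conj push_monotone (conj arr_push arr_extend_strip)))).
Qed.
End LastLetter.

Theorem mainTheorem18 (E : Type) (I : E -> E -> Prop) (lt : E -> E -> Prop)
  (I_irrefl : forall a, ~ I a a) (I_sym : forall a b, I a b -> I b a)
  (lt_irrefl : forall a, ~ lt a a)
  (lt_trans : forall a b c, lt a b -> lt b c -> lt a c)
  (lt_total : forall a b, lt a b \/ a = b \/ lt b a) :
  strong_coinitial (incl (FM I) (@union_T E I lt)).
Proof.
  intro d. change (acyclic (Cm E I lt d)). revert d.
  apply trace_ind.
  - apply acyclic_Cm_one; auto.
  - intros d a IH. apply (acyclic_of_dominated _ (Cm E I lt d)); auto using Cm_thin.
    apply Cm_snoc_dominated; auto.
Qed.
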